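(* Set $d^L=\beta\frac{v_0}{v_U}e^{-\mu a/v_0}g_0$, $d^U=\beta g_U\frac{v_U}{v_0}$, $Q=[d^L/\gamma,\,d^U/\gamma]$ and $R=\{\phi\in C^1:\phi([-r,0])\subset Q\}$. Then: (i) For all $\phi\in X_G$, $t_\phi=\infty$. (ii) For every neighbourhood $N$ of $Q$ in $\mathbb{R}$ and each $\phi\in X_G$ there exists $t(\phi,N)\in[0,\infty)$ with $x^\phi(t)\in N$ for all $t\ge t(\phi,N)$. (iii) If $\phi\in X_G\cap R$ then $x^\phi(t)\in Q$ for all $t\ge 0$. (iv) If $\phi\in X_G$ is strictly positive then $x^\phi(t)>0$ for all $t\ge -r$.
   Context: Constants $\beta,\mu,\gamma,a>0$. The function $g:\mathbb{R}\to(0,\infty)$ is continuously differentiable with $0<g_0:=\inf g(\mathbb{R})\le \sup g(\mathbb{R})=g_U<\infty$. The function $v:\mathbb{R}\to\mathbb{R}$ is continuously differentiable with $0<v_0\le v(x)\le v_U$ for all $x$. Fix $r>a/v_0$; $C=C([-r,0],\mathbb{R})$, $C^1=C^1([-r,0],\mathbb{R})$ with norm $|\phi|_1=\max|\phi|+\max|\phi'|$. Segments: $x_t(s)=x(t+s)$, $s\in[-r,0]$. For $\phi\in C$ let $\delta(\phi)$ be the unique $u\in(0,r)$ with $a=\int_{-u}^0 v(\phi(s))\,ds$. Define $G:C^1\to\mathbb{R}$ by $$G(\phi)=\beta e^{-\mu\delta(\phi)}\frac{v(\phi(0))}{v(\phi(-\delta(\phi)))}g(\phi(-\delta(\phi)))-\gamma\phi(0),$$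 and $X_G=\{\phi\in C^1:\phi'(0)=G(\phi)\}$. Each $\phi\in X_G$ determines a unique maximal continuously differentiable solution $x^\phi:[-r,t_\phi)\to\mathbb{R}$, $0<t_\phi\le\infty$, of $x'(t)=G(x_t)$ for $0<t<t_\phi$, $x_0=\phi$. *)

From Stdlib Require Import Reals Lra ClassicalEpsilon.
From Coquelicot Require Import Coquelicot.
Open Scope R_scope.

Definition has_deriv_within (D : R -> Prop) (f f' : R -> R) : Prop :=
  forall s, D s ->
    filterlim (fun h => (f (s + h) - f s) / h)
      (within (fun h => h <> 0 /\ D (s + h)) (locally 0))
      (locally (f' s)).

Definition cont_within (D : R -> Prop) (f : R -> R) : Prop :=
  forall s, D s -> filterlim f (within D (locally s)) (locally (f s)).

Definition C1_on (D : R -> Prop) (f df : R -> R) : Prop :=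
  has_deriv_within D f df /\ cont_within D df.

Definition C1_R (f : R -> R) : Prop :=
  exists f' : R -> R, forall x, is_derive f x (f' x) /\ continuous f' x.

Definition Iseg (r : R) : R -> Prop := fun s => - r <= s <= 0.

Definition seg (x : R -> R) (t : R) : R -> R := fun s => x (t + s).

Definition delta (a r : R) (v : R -> R) (phi : R -> R) : R :=
  epsilon (inhabits 0)
    (fun u => 0 < u < r /\ RInt (fun s => v (phi s)) (- u) 0 = a).

Definition G (beta mu gamma a r : R) (g v : R -> R) (phi : R -> R) : R :=
  let d := delta a r v phi in
  beta * exp (- mu * d) * (v (phi 0) / v (phi (- d))) * g (phi (- d))
  - gamma * phi 0.

Definition in_XG (beta mu gamma a r : R) (g v : R -> R) (phi dphi : R -> R) : Prop :=
  C1_on (Iseg r) phi dphi /\ dphi 0 = G beta mu gamma a r g v phi.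

Definition global_solution (beta mu gamma a r : R) (g v : R -> R)
    (phi x dx : R -> R) : Prop :=
  C1_on (fun t => - r <= t) x dx /\
  (forall s, Iseg r s -> x s = phi s) /\
  (forall t, 0 < t -> dx t = G beta mu gamma a r g v (seg x t)).

Definition nbhd_of_set (Q N : R -> Prop) : Prop :=
  exists O : R -> Prop, open O /\ (forall y, Q y -> O y) /\ (forall y, O y -> N y).

Definition is_inf (S : R -> Prop) (m : R) : Prop :=
  (forall y, S y -> m <= y) /\
  (forall m', (forall y, S y -> m' <= y) -> m' <= m).

(* Along any solution, x' = F(t) - gamma x, where the production term
   F(t) = beta e^(-mu delta) v(x(t)) g(x(t - delta)) / v(x(t - delta)) lies in [dL, dU]
   because delta <= a / v0.  Comparison with the linear equation traps x(t) between
   dL / gamma + (x(0) - dL / gamma) e^(-gamma t) and dU / gamma + (x(0) - dU / gamma) e^(-gamma t),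
   which gives (ii)-(iv) and an a priori bound.

   Existence follows the method of steps with a fixed step k <= a / vU.  On [T, T + k] the
   delayed time t - delta lies before T, where the solution is known, and it is determined by
   V(t) = integral of v(x) over [T, t]; so (x, V) solves an ordinary differential system with a
   Lipschitz right-hand side, which Picard iteration solves on the whole step.  The a priori
   bound keeps the Lipschitz constants, hence k, independent of T, so the steps cover [0, oo). *)

From Stdlib Require Import Reals.
From Coquelicot Require Import Coquelicot.
From Stdlib Require Import Lra Lia ZArith.
From Stdlib Require Import ClassicalEpsilon FunctionalExtensionality PropExtensionality.
Open Scope R_scope.

(** * Lipschitz functions, clamping and integrals *)

Definition lipschitz (f : R -> R) (K : R) : Prop :=
  forall s1 s2, Rabs (f s1 - f s2) <= K * Rabs (s1 - s2).

Definition lipschitz2 (F : R -> R -> R) (L : R) : Prop :=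
  forall x y x' y', Rabs (F x y - F x' y') <= L * (Rabs (x - x') + Rabs (y - y')).

Lemma ball_R_Rabs (x y e : R) : ball x e y <-> Rabs (y - x) < e.
Proof. unfold ball; simpl; unfold AbsRing_ball, minus, plus, opp, abs; simpl. tauto. Qed.

Lemma continuous_eps (f : R -> R) x :
  continuous f x <->
  forall eps, 0 < eps -> exists d, 0 < d /\ forall y, Rabs (y - x) < d -> Rabs (f y - f x) < eps.
Proof.
  split.
  - intros H e He.
    destruct (proj1 (filterlim_locally f (f x)) H (mkposreal e He)) as [[d Hd] Hy].
    exists d; split; [exact Hd|]. intros y Hy'. apply ball_R_Rabs, Hy, ball_R_Rabs, Hy'.
  - intros H. apply filterlim_locally. intros [e He]. simpl.
    destruct (H e He) as [d [Hd Hy]]. exists (mkposreal d Hd). intros y Hb.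
    apply ball_R_Rabs, Hy, ball_R_Rabs, Hb.
Qed.

Lemma lipschitz_continuous (f : R -> R) K : lipschitz f K -> forall x, continuous f x.
Proof.
  intros H x. apply continuous_eps. intros e He.
  assert (HK : 0 < Rabs K + 1) by (pose proof (Rabs_pos K); lra).
  exists (e / (Rabs K + 1)). split; [apply Rdiv_lt_0_compat; lra|].
  intros y Hy. eapply Rle_lt_trans; [apply H|].
  apply Rle_lt_trans with ((Rabs K + 1) * Rabs (y - x)).
  - pose proof (Rabs_pos (y - x)). pose proof (RRle_abs K). nra.
  - apply (Rmult_lt_compat_l (Rabs K + 1)) in Hy; [|lra].
    replace ((Rabs K + 1) * (e / (Rabs K + 1))) with e in Hy by (field; lra). lra.
Qed.

Lemma lipschitz_le (f : R -> R) K K' : lipschitz f K -> K <= K' -> lipschitz f K'.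
Proof.
  intros H HK s1 s2. eapply Rle_trans; [apply H|].
  apply Rmult_le_compat_r; [apply Rabs_pos | exact HK].
Qed.

Lemma continuous_shift (f : R -> R) (t x : R) :
  continuous f (t + x) -> continuous (fun s => f (t + s)) x.
Proof.
  intros H. apply (continuous_comp (fun s => t + s) f); [|exact H].
  apply (ex_derive_continuous (K:=R_AbsRing) (V:=R_NormedModule)). auto_derive. auto.
Qed.

Definition clamp (lo hi x : R) : R := Rmax lo (Rmin hi x).

Lemma clamp_in lo hi x : lo <= hi -> lo <= clamp lo hi x <= hi.
Proof. unfold clamp; intros; split. apply Rmax_l. apply Rmax_lub; auto. apply Rmin_l. Qed.

Lemma clamp_id lo hi x : lo <= x <= hi -> clamp lo hi x = x.
Proof. unfold clamp; intros. rewrite Rmin_right by lra. rewrite Rmax_right; lra. Qed.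

Lemma clamp_point c s : clamp c c s = c.
Proof. pose proof (clamp_in c c s (Rle_refl c)). lra. Qed.

Lemma clamp_lipschitz lo hi : lipschitz (clamp lo hi) 1.
Proof.
  intros x y. rewrite Rmult_1_l. unfold clamp, Rmax, Rmin.
  repeat (destruct Rle_dec); unfold Rabs; repeat destruct Rcase_abs; lra.
Qed.

Lemma continuous_clamp lo hi x : continuous (clamp lo hi) x.
Proof. exact (lipschitz_continuous _ _ (clamp_lipschitz lo hi) x). Qed.

Lemma ex_RInt_continuous_R (f : R -> R) a b : (forall x, continuous f x) -> ex_RInt f a b.
Proof. intros H; apply (ex_RInt_continuous (V:=R_CompleteNormedModule)); auto. Qed.

Lemma abs_RInt_le_const_abs (f : R -> R) a b B :
  ex_RInt f a b -> (forall t, Rmin a b <= t <= Rmax a b -> Rabs (f t) <= B) ->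
  Rabs (RInt f a b) <= B * Rabs (b - a).
Proof.
  intros Hex Hb. destruct (Rle_dec a b).
  - rewrite Rmin_left, Rmax_right in Hb by lra.
    rewrite (Rabs_right (b - a)) by lra. rewrite Rmult_comm. apply abs_RInt_le_const; auto.
  - rewrite Rmin_right, Rmax_left in Hb by lra.
    rewrite <- (opp_RInt_swap f) by (apply ex_RInt_swap; exact Hex). unfold opp; simpl.
    rewrite Rabs_Ropp.
    rewrite (Rabs_left (b - a)) by lra. replace (- (b - a)) with (a - b) by lra.
    rewrite Rmult_comm. apply abs_RInt_le_const; [lra | apply ex_RInt_swap; exact Hex | exact Hb].
Qed.

Lemma RInt_minus_R (F G : R -> R) a b :
  (forall x, continuous F x) -> (forall x, continuous G x) ->
  RInt (fun s => F s - G s) a b = RInt F a b - RInt G a b.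
Proof. intros; apply (RInt_minus (V:=R_CompleteNormedModule)); apply ex_RInt_continuous_R; auto.
Qed.

Lemma RInt_Chasles_R (F : R -> R) a b c : (forall x, continuous F x) ->
  RInt F a b + RInt F b c = RInt F a c.
Proof. intros; apply (RInt_Chasles (V:=R_CompleteNormedModule)); apply ex_RInt_continuous_R; auto.
Qed.

Lemma RInt_point_R (F : R -> R) a : RInt F a a = 0.
Proof. exact (RInt_point (V:=R_CompleteNormedModule) a F). Qed.

Lemma RInt_shift (f : R -> R) t p q : (forall x, continuous f x) ->
  RInt (fun s => f (t + s)) p q = RInt f (t + p) (t + q).
Proof.
  intros Hf.
  assert (E := RInt_comp_lin (V:=R_CompleteNormedModule) f 1 t p q).
  replace (1 * p + t) with (t + p) in E by ring. replace (1 * q + t) with (t + q) in E by ring.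
  rewrite <- E by (apply ex_RInt_continuous_R, Hf). apply RInt_ext. intros.
  unfold scal; simpl; unfold mult; simpl. rewrite Rmult_1_l. f_equal. ring.
Qed.

Lemma lipschitz_nonneg f K : lipschitz f K -> 0 <= K.
Proof.
  intros H. pose proof (H 1 0). rewrite Rminus_0_r, Rabs_R1, Rmult_1_r in H0.
  pose proof (Rabs_pos (f 1 - f 0)). lra.
Qed.

Lemma lipschitz_mul p q lp lq bp bq :
  lipschitz p lp -> lipschitz q lq ->
  (forall s, Rabs (p s) <= bp) -> (forall s, Rabs (q s) <= bq) ->
  lipschitz (fun s => p s * q s) (lp * bq + bp * lq).
Proof.
  intros Hp Hq Hbp Hbq s1 s2.
  replace (p s1 * q s1 - p s2 * q s2) with ((p s1 - p s2) * q s1 + p s2 * (q s1 - q s2)) by ring.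
  eapply Rle_trans; [apply Rabs_triang|]. rewrite !Rabs_mult.
  pose proof (Hp s1 s2). pose proof (Hq s1 s2). pose proof (Hbp s2). pose proof (Hbq s1).
  pose proof (Rabs_pos (p s1 - p s2)). pose proof (Rabs_pos (q s1 - q s2)).
  pose proof (Rabs_pos (p s2)). pose proof (Rabs_pos (q s1)). pose proof (Rabs_pos (s1 - s2)).
  pose proof (lipschitz_nonneg _ _ Hp). pose proof (lipschitz_nonneg _ _ Hq).
  apply Rle_trans with (lp * Rabs (s1 - s2) * bq + bp * (lq * Rabs (s1 - s2))); [|right; ring].
  apply Rplus_le_compat; apply Rmult_le_compat; auto; apply Rmult_le_pos; auto.
Qed.

Lemma lipschitz_inv p lp c : 0 < c -> (forall s, c <= p s) -> lipschitz p lp ->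
  lipschitz (fun s => / p s) (lp / c ^ 2).
Proof.
  intros Hc Hpc Hp s1 s2. pose proof (Hpc s1). pose proof (Hpc s2).
  replace (/ p s1 - / p s2) with ((p s2 - p s1) * / (p s1 * p s2)) by (field; lra).
  rewrite Rabs_mult, Rabs_minus_sym, (Rabs_right (/ _)) by (left; apply Rinv_0_lt_compat; nra).
  assert (Hinv : / (p s1 * p s2) <= / c ^ 2) by (apply Rinv_le_contravar; nra).
  assert (0 < / (p s1 * p s2)) by (apply Rinv_0_lt_compat; nra).
  pose proof (Hp s1 s2). pose proof (Rabs_pos (p s1 - p s2)). pose proof (Rabs_pos (s1 - s2)).
  pose proof (lipschitz_nonneg _ _ Hp).
  apply Rle_trans with (lp * Rabs (s1 - s2) * / c ^ 2).
  - apply Rmult_le_compat; auto; lra.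
  - right. unfold Rdiv. ring.
Qed.

Lemma lipschitz_comp (f h : R -> R) Lf Lh :
  lipschitz f Lf -> lipschitz h Lh -> lipschitz (fun s => f (h s)) (Lf * Lh).
Proof.
  intros Hf Hh s1 s2. eapply Rle_trans; [apply Hf|]. rewrite Rmult_assoc.
  apply Rmult_le_compat_l; [apply (lipschitz_nonneg _ _ Hf) | apply Hh].
Qed.

Lemma lipschitz_comp_on (f h : R -> R) lo hi Lf Lh :
  (forall x y, lo <= x <= hi -> lo <= y <= hi -> Rabs (f x - f y) <= Lf * Rabs (x - y)) ->
  0 <= Lf -> (forall s, lo <= h s <= hi) -> lipschitz h Lh ->
  lipschitz (fun s => f (h s)) (Lf * Lh).
Proof.
  intros Hf HLf Hh Hl s1 s2. eapply Rle_trans; [apply Hf; apply Hh|].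
  rewrite Rmult_assoc. apply Rmult_le_compat_l; auto.
Qed.

Lemma lipschitz2_le F L L' : lipschitz2 F L -> L <= L' -> lipschitz2 F L'.
Proof.
  intros H HL x y x' y'. eapply Rle_trans; [apply H|]. apply Rmult_le_compat_r; auto.
  pose proof (Rabs_pos (x - x')). pose proof (Rabs_pos (y - y')). lra.
Qed.

Lemma lipschitz2_fst p lp : lipschitz p lp -> lipschitz2 (fun x _ => p x) lp.
Proof.
  intros H x y x' y'. eapply Rle_trans; [apply H|]. pose proof (lipschitz_nonneg _ _ H).
  apply Rmult_le_compat_l; auto. pose proof (Rabs_pos (y - y')). lra.
Qed.

Lemma lipschitz2_mul_sep p q lp lq bp bq :
  lipschitz p lp -> lipschitz q lq ->
  (forall s, Rabs (p s) <= bp) -> (forall s, Rabs (q s) <= bq) ->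
  lipschitz2 (fun x y => p x * q y) (lp * bq + bp * lq).
Proof.
  intros Hp Hq Hbp Hbq x y x' y'.
  replace (p x * q y - p x' * q y') with ((p x - p x') * q y + p x' * (q y - q y')) by ring.
  eapply Rle_trans; [apply Rabs_triang|]. rewrite !Rabs_mult.
  pose proof (Hp x x'). pose proof (Hq y y'). pose proof (Hbp x'). pose proof (Hbq y).
  pose proof (Rabs_pos (p x - p x')). pose proof (Rabs_pos (q y - q y')).
  pose proof (Rabs_pos (p x')). pose proof (Rabs_pos (q y)).
  pose proof (Rabs_pos (x - x')). pose proof (Rabs_pos (y - y')).
  pose proof (lipschitz_nonneg _ _ Hp). pose proof (lipschitz_nonneg _ _ Hq).
  assert (0 <= bp) by lra. assert (0 <= bq) by lra.
  assert (0 <= lp * bq * Rabs (y - y')) by (repeat apply Rmult_le_pos; auto).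
  assert (0 <= bp * lq * Rabs (x - x')) by (repeat apply Rmult_le_pos; auto).
  apply Rle_trans with (lp * Rabs (x - x') * bq + bp * (lq * Rabs (y - y'))); [|nra].
  apply Rplus_le_compat; apply Rmult_le_compat; auto; apply Rmult_le_pos; auto.
Qed.

Lemma lipschitz2_lin F1 F2 L1 L2 c1 c2 : 0 <= c1 -> 0 <= c2 ->
  lipschitz2 F1 L1 -> lipschitz2 F2 L2 ->
  lipschitz2 (fun x y => c1 * F1 x y - c2 * F2 x y) (c1 * L1 + c2 * L2).
Proof.
  intros Hc1 Hc2 H1 H2 x y x' y'.
  replace (c1 * F1 x y - c2 * F2 x y - (c1 * F1 x' y' - c2 * F2 x' y')) with
    (c1 * (F1 x y - F1 x' y') - c2 * (F2 x y - F2 x' y')) by ring.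
  eapply Rle_trans; [apply Rabs_triang|].
  rewrite Rabs_Ropp, !Rabs_mult, (Rabs_right c1), (Rabs_right c2) by lra.
  pose proof (H1 x y x' y'). pose proof (H2 x y x' y').
  apply Rle_trans with (c1 * (L1 * (Rabs (x - x') + Rabs (y - y'))) +
    c2 * (L2 * (Rabs (x - x') + Rabs (y - y'))));
    [apply Rplus_le_compat; apply Rmult_le_compat_l; auto|].
  lra.
Qed.

(** * Picard iteration for planar systems *)

Lemma pow_half_pos n : 0 < (/2) ^ n.
Proof. apply pow_lt; lra. Qed.

Lemma exists_pow_half_lt C eps : 0 < eps -> exists n, C * (/2) ^ n < eps.
Proof.
  intros He. assert (HC : 0 < Rabs C + 1) by (pose proof (Rabs_pos C); lra).
  destruct (pow_lt_1_zero (/2)) with (y := eps / (Rabs C + 1)) as [N HN].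
  - rewrite Rabs_right; lra.
  - apply Rdiv_lt_0_compat; lra.
  - exists N. specialize (HN N (le_n _)). rewrite Rabs_right in HN by (left; apply pow_half_pos).
    apply (Rmult_lt_compat_l (Rabs C + 1)) in HN; [|lra].
    replace ((Rabs C + 1) * (eps / (Rabs C + 1))) with eps in HN by (field; lra).
    pose proof (pow_half_pos N). pose proof (RRle_abs C). nra.
Qed.

Lemma le_of_le_plus_pow_half a b C : (forall n, a <= b + C * (/2) ^ n) -> a <= b.
Proof.
  intros H. apply Rle_plus_epsilon. intros e He.
  destruct (exists_pow_half_lt C e He) as [n Hn]. specialize (H n). lra.
Qed.

Lemma geometric_cauchy (u : nat -> R) C :
  (forall n, Rabs (u (S n) - u n) <= C * (/2) ^ n) ->
  forall n m, (n <= m)%nat -> Rabs (u m - u n) <= 2 * C * (/2) ^ n.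
Proof.
  intros H n m Hnm. replace m with (n + (m - n))%nat by lia.
  assert (Hsum : forall j, Rabs (u (n + j)%nat - u n) <= 2 * C * ((/2) ^ n - (/2) ^ (n + j))).
  { induction j as [|j IH].
    - rewrite Nat.add_0_r, !Rminus_diag, Rabs_R0. lra.
    - rewrite Nat.add_succ_r. pose proof (H (n + j)%nat) as Hj.
      change ((/2) ^ S (n + j)) with (/2 * (/2) ^ (n + j)).
      replace (u (S (n + j)) - u n) with ((u (S (n + j)) - u (n + j)%nat) + (u (n + j)%nat - u n))
        by ring.
      eapply Rle_trans; [apply Rabs_triang|]. lra. }
  eapply Rle_trans; [apply Hsum|].
  pose proof (H n). pose proof (Rabs_pos (u (S n) - u n)). pose proof (pow_half_pos n).
  assert (0 <= C) by nra. pose proof (pow_half_pos (n + (m - n))). nra.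
Qed.

Lemma fast_cauchy_limit (u : nat -> R -> R) C :
  (forall n m t, (n <= m)%nat -> Rabs (u m t - u n t) <= C * (/2) ^ n) ->
  exists U : R -> R, forall n t, Rabs (U t - u n t) <= C * (/2) ^ n.
Proof.
  intros H.
  assert (Hc : forall t, Cauchy_crit (fun n => u n t)).
  { intros t eps He. destruct (exists_pow_half_lt (2 * C) eps He) as [N HN].
    exists N. intros n m Hn Hm. unfold Rdist. pose proof (H N n t Hn). pose proof (H N m t Hm).
    replace (u n t - u m t) with ((u n t - u N t) - (u m t - u N t)) by ring.
    eapply Rle_lt_trans; [apply Rabs_triang|]. rewrite Rabs_Ropp. lra. }
  exists (fun t => proj1_sig (Rcomplete.R_complete _ (Hc t))). intros n t.
  destruct (Rcomplete.R_complete _ (Hc t)) as [l Hl]; simpl.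
  apply Rle_plus_epsilon. intros e He. destruct (Hl e He) as [N HN].
  specialize (HN (max N n) (Nat.le_max_l _ _)). specialize (H n (max N n) t (Nat.le_max_r _ _)).
  unfold Rdist in HN.
  replace (l - u n t) with ((u (max N n) t - u n t) - (u (max N n) t - l)) by ring.
  eapply Rle_trans; [apply Rabs_triang|]. rewrite Rabs_Ropp. lra.
Qed.

Lemma lipschitz_limit (U : R -> R) (u : nat -> R -> R) C K :
  (forall n t, Rabs (U t - u n t) <= C * (/2) ^ n) -> (forall n, lipschitz (u n) K) ->
  lipschitz U K.
Proof.
  intros H1 H2 s1 s2. apply (le_of_le_plus_pow_half _ _ (2 * C)). intros n.
  replace (U s1 - U s2) with ((U s1 - u n s1) - (U s2 - u n s2) + (u n s1 - u n s2)) by ring.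
  eapply Rle_trans; [apply Rabs_triang|].
  eapply Rle_trans; [apply Rplus_le_compat_r, Rabs_triang|].
  rewrite Rabs_Ropp. pose proof (H1 n s1). pose proof (H1 n s2). pose proof (H2 n s1 s2). lra.
Qed.

Lemma continuous_lipschitz2_comp (f : R -> R -> R -> R) L X Y t :
  0 <= L -> (forall s, lipschitz2 (f s) L) ->
  (forall x y, continuous (fun s => f s x y) t) ->
  continuous X t -> continuous Y t -> continuous (fun s => f s (X s) (Y s)) t.
Proof.
  intros HL Hl Hc HX HY. apply continuous_eps. intros e He.
  assert (He' : 0 < e / (4 * (L + 1))) by (apply Rdiv_lt_0_compat; lra).
  destruct (proj1 (continuous_eps _ _) (Hc (X t) (Y t)) (e / 2)) as [d1 [Hd1 H1]]; [lra|].
  destruct (proj1 (continuous_eps _ _) HX _ He') as [d2 [Hd2 H2]].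
  destruct (proj1 (continuous_eps _ _) HY _ He') as [d3 [Hd3 H3]].
  exists (Rmin d1 (Rmin d2 d3)). split; [repeat apply Rmin_pos; auto|].
  intros y Hy. pose proof (Rmin_l d1 (Rmin d2 d3)). pose proof (Rmin_r d1 (Rmin d2 d3)).
  pose proof (Rmin_l d2 d3). pose proof (Rmin_r d2 d3).
  specialize (H1 y ltac:(lra)). specialize (H2 y ltac:(lra)). specialize (H3 y ltac:(lra)).
  specialize (Hl y (X y) (Y y) (X t) (Y t)).
  assert (Hsmall : L * (2 * (e / (4 * (L + 1)))) < e / 2).
  { replace (L * (2 * (e / (4 * (L + 1))))) with ((L / (L + 1)) * (e / 2)) by (field; lra).
    assert (L / (L + 1) < 1) by (apply (Rmult_lt_reg_r (L + 1)); [lra | field_simplify; lra]).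
    nra. }
  replace (f y (X y) (Y y) - f t (X t) (Y t)) with
    ((f y (X y) (Y y) - f y (X t) (Y t)) + (f y (X t) (Y t) - f t (X t) (Y t))) by ring.
  eapply Rle_lt_trans; [apply Rabs_triang|].
  assert (L * (Rabs (X y - X t) + Rabs (Y y - Y t)) <= L * (2 * (e / (4 * (L + 1)))))
    by (apply Rmult_le_compat_l; lra).
  lra.
Qed.

Definition bounded_lipschitz_rhs (B L : R) (f : R -> R -> R -> R) : Prop :=
  (forall t x y, Rabs (f t x y) <= B) /\ (forall t, lipschitz2 (f t) L) /\
  (forall x y t, continuous (fun s => f s x y) t).

(* The integral is stopped at the ends of [t0, t0 + k], so every iterate is
   defined and B-Lipschitz on the whole line. *)
Definition picard_map (t0 k : R) (f : R -> R -> R -> R) (z0 : R) (X Y : R -> R) (t : R) : R :=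
  z0 + RInt (fun s => f s (X s) (Y s)) t0 (clamp t0 (t0 + k) t).

Fixpoint picard_iter (t0 k x0 y0 : R) (f1 f2 : R -> R -> R -> R) (n : nat)
    : (R -> R) * (R -> R) :=
  match n with
  | O => (fun _ => x0, fun _ => y0)
  | S n => let p := picard_iter t0 k x0 y0 f1 f2 n in
           (picard_map t0 k f1 x0 (fst p) (snd p), picard_map t0 k f2 y0 (fst p) (snd p))
  end.

Section PicardLindelof.

Variables (t0 k L B x0 y0 : R) (f1 f2 : R -> R -> R -> R).
Hypotheses (hk : 0 < k) (hL : 0 <= L) (hkL : 4 * k * L <= 1)
  (hf1 : bounded_lipschitz_rhs B L f1) (hf2 : bounded_lipschitz_rhs B L f2).

Let Xn n := fst (picard_iter t0 k x0 y0 f1 f2 n).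
Let Yn n := snd (picard_iter t0 k x0 y0 f1 f2 n).

Lemma picard_bound_nonneg : 0 <= B.
Proof. destruct hf1 as [Hb _]. pose proof (Hb 0 0 0). pose proof (Rabs_pos (f1 0 0 0)). lra. Qed.

Lemma picard_clamp_dist t : Rabs (clamp t0 (t0 + k) t - t0) <= k.
Proof. pose proof (clamp_in t0 (t0 + k) t). rewrite Rabs_right; lra. Qed.

Lemma picard_map_lipschitz f z0 X Y :
  bounded_lipschitz_rhs B L f -> (forall s, continuous X s) -> (forall s, continuous Y s) ->
  lipschitz (picard_map t0 k f z0 X Y) B.
Proof.
  intros [Hb [Hl Hc]] HX HY s1 s2. unfold picard_map.
  assert (HF : forall s, continuous (fun u => f u (X u) (Y u)) s)
    by (intros; apply (continuous_lipschitz2_comp _ L); auto).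
  rewrite <- (RInt_Chasles_R _ t0 (clamp t0 (t0 + k) s2) (clamp t0 (t0 + k) s1)) by exact HF.
  rewrite Rminus_plus_l_l, Rplus_minus_l.
  eapply Rle_trans.
  - apply abs_RInt_le_const_abs; [apply ex_RInt_continuous_R, HF | intros; apply Hb].
  - apply Rmult_le_compat_l; [apply picard_bound_nonneg|].
    pose proof (clamp_lipschitz t0 (t0 + k) s1 s2). lra.
Qed.

Lemma picard_map_close f z0 X Y X' Y' D t :
  bounded_lipschitz_rhs B L f ->
  (forall s, continuous X s) -> (forall s, continuous Y s) ->
  (forall s, continuous X' s) -> (forall s, continuous Y' s) ->
  (forall s, Rabs (X s - X' s) + Rabs (Y s - Y' s) <= D) ->
  Rabs (picard_map t0 k f z0 X Y t - picard_map t0 k f z0 X' Y' t) <= L * D * k.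
Proof.
  intros [Hb [Hl Hc]] HX HY HX' HY' HD. unfold picard_map.
  rewrite Rminus_plus_l_l.
  rewrite <- RInt_minus_R by (intros; apply (continuous_lipschitz2_comp _ L); auto).
  assert (HD0 : 0 <= D) by (pose proof (HD 0); pose proof (Rabs_pos (X 0 - X' 0));
    pose proof (Rabs_pos (Y 0 - Y' 0)); lra).
  eapply Rle_trans.
  - apply abs_RInt_le_const_abs.
    + apply ex_RInt_continuous_R. intros s.
      apply (continuous_minus (V:=R_NormedModule)); apply (continuous_lipschitz2_comp _ L); auto.
    + intros s _. eapply Rle_trans; [apply Hl|]. apply Rmult_le_compat_l; auto.
  - apply Rmult_le_compat_l; [nra | apply picard_clamp_dist].
Qed.

Lemma picard_iter_lipschitz n : lipschitz (Xn n) B /\ lipschitz (Yn n) B.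
Proof.
  pose proof picard_bound_nonneg.
  induction n as [|n [IH1 IH2]].
  - split; intros s1 s2; unfold Xn, Yn; simpl; rewrite Rminus_diag, Rabs_R0;
      apply Rmult_le_pos; auto; apply Rabs_pos.
  - pose proof (lipschitz_continuous _ _ IH1). pose proof (lipschitz_continuous _ _ IH2).
    split; apply picard_map_lipschitz; auto.
Qed.

Lemma picard_iter_continuous n : (forall s, continuous (Xn n) s) /\ (forall s, continuous (Yn n) s).
Proof.
  destruct (picard_iter_lipschitz n).
  split; eapply lipschitz_continuous; eassumption.
Qed.

Lemma picard_map_start f z0 X Y t :
  bounded_lipschitz_rhs B L f -> (forall s, continuous X s) -> (forall s, continuous Y s) ->
  Rabs (picard_map t0 k f z0 X Y t - z0) <= B * k.
Proof.
  intros [Hb [Hl Hc]] HX HY. unfold picard_map. rewrite Rplus_minus_l.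
  eapply Rle_trans.
  - apply abs_RInt_le_const_abs; [|intros; apply Hb].
    apply ex_RInt_continuous_R. intros; apply (continuous_lipschitz2_comp _ L); auto.
  - apply Rmult_le_compat_l; [apply picard_bound_nonneg | apply picard_clamp_dist].
Qed.

Lemma picard_iter_step n t :
  Rabs (Xn (S n) t - Xn n t) + Rabs (Yn (S n) t - Yn n t) <= 2 * B * k * (/2) ^ n.
Proof.
  pose proof picard_bound_nonneg.
  revert t. induction n as [|n IH]; intros t.
  - assert (Hc : forall c s : R, continuous (fun _ : R => c) s) by (intros; apply continuous_const).
    pose proof (picard_map_start f1 x0 _ _ t hf1 (Hc x0) (Hc y0)).
    pose proof (picard_map_start f2 y0 _ _ t hf2 (Hc x0) (Hc y0)).
    unfold Xn, Yn; simpl. lra.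
  - destruct (picard_iter_continuous n) as [HXn HYn].
    destruct (picard_iter_continuous (S n)) as [HXS HYS].
    assert (HD : forall s, Rabs (Xn (S n) s - Xn n s) + Rabs (Yn (S n) s - Yn n s)
                             <= 2 * B * k * (/2) ^ n) by exact IH.
    pose proof (picard_map_close f1 x0 _ _ _ _ _ t hf1 HXS HYS HXn HYn HD).
    pose proof (picard_map_close f2 y0 _ _ _ _ _ t hf2 HXS HYS HXn HYn HD).
    change (Rabs (picard_map t0 k f1 x0 (Xn (S n)) (Yn (S n)) t -
                  picard_map t0 k f1 x0 (Xn n) (Yn n) t) +
            Rabs (picard_map t0 k f2 y0 (Xn (S n)) (Yn (S n)) t -
                  picard_map t0 k f2 y0 (Xn n) (Yn n) t)
            <= 2 * B * k * (/2 * (/2) ^ n)).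
    pose proof (pow_half_pos n). assert (0 <= B * k * (/2) ^ n) by (apply Rmult_le_pos; nra).
    nra.
Qed.

Lemma picard_iter_cauchy n m t : (n <= m)%nat ->
  Rabs (Xn m t - Xn n t) <= 4 * B * k * (/2) ^ n /\
  Rabs (Yn m t - Yn n t) <= 4 * B * k * (/2) ^ n.
Proof.
  intros Hnm.
  replace (4 * B * k) with (2 * (2 * B * k)) by ring.
  split; apply (geometric_cauchy (fun n => _ n t)); auto; intros j;
    pose proof (picard_iter_step j t);
    pose proof (Rabs_pos (Xn (S j) t - Xn j t)); pose proof (Rabs_pos (Yn (S j) t - Yn j t)); lra.
Qed.

Lemma picard_map_limit f z0 (X Y Z : R -> R) (Zn : nat -> R -> R) t :
  bounded_lipschitz_rhs B L f ->
  (forall n s, Rabs (X s - Xn n s) <= 4 * B * k * (/2) ^ n) ->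
  (forall n s, Rabs (Y s - Yn n s) <= 4 * B * k * (/2) ^ n) ->
  (forall n s, Rabs (Z s - Zn n s) <= 4 * B * k * (/2) ^ n) ->
  (forall n s, Zn (S n) s = picard_map t0 k f z0 (Xn n) (Yn n) s) ->
  Z t = picard_map t0 k f z0 X Y t.
Proof.
  intros Hf HX HY HZ HZn.
  assert (HXl : lipschitz X B)
    by (apply (lipschitz_limit X Xn (4 * B * k)); [exact HX | apply picard_iter_lipschitz]).
  assert (HYl : lipschitz Y B)
    by (apply (lipschitz_limit Y Yn (4 * B * k)); [exact HY | apply picard_iter_lipschitz]).
  apply Rminus_diag_uniq, Rabs_eq_0, Rle_antisym; [|apply Rabs_pos].
  apply (le_of_le_plus_pow_half _ _ (2 * B * k + L * (8 * B * k) * k)). intros n.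
  destruct (picard_iter_continuous n) as [HXn HYn].
  assert (HD : forall s, Rabs (Xn n s - X s) + Rabs (Yn n s - Y s) <= 8 * B * k * (/2) ^ n).
  { intros s. rewrite (Rabs_minus_sym (Xn n s)), (Rabs_minus_sym (Yn n s)).
    pose proof (HX n s). pose proof (HY n s). lra. }
  pose proof (picard_map_close f z0 _ _ _ _ _ t Hf HXn HYn
    (lipschitz_continuous _ _ HXl) (lipschitz_continuous _ _ HYl) HD) as Hclose.
  pose proof (HZ (S n) t) as HZS. rewrite HZn in HZS.
  change ((/2) ^ S n) with (/2 * (/2) ^ n) in HZS.
  replace (Z t - picard_map t0 k f z0 X Y t) with
    ((Z t - picard_map t0 k f z0 (Xn n) (Yn n) t)
     + (picard_map t0 k f z0 (Xn n) (Yn n) t - picard_map t0 k f z0 X Y t)) by ring.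
  eapply Rle_trans; [apply Rabs_triang|]. lra.
Qed.

Theorem picard_lindelof2 : exists X Y : R -> R,
  lipschitz X B /\ lipschitz Y B /\
  (forall t, t0 <= t <= t0 + k ->
     X t = x0 + RInt (fun s => f1 s (X s) (Y s)) t0 t /\
     Y t = y0 + RInt (fun s => f2 s (X s) (Y s)) t0 t).
Proof.
  destruct (fast_cauchy_limit Xn (4 * B * k)) as [X HX]; [intros; apply picard_iter_cauchy; auto|].
  destruct (fast_cauchy_limit Yn (4 * B * k)) as [Y HY]; [intros; apply picard_iter_cauchy; auto|].
  exists X, Y. split; [|split].
  - apply (lipschitz_limit X Xn (4 * B * k)); [exact HX | apply picard_iter_lipschitz].
  - apply (lipschitz_limit Y Yn (4 * B * k)); [exact HY | apply picard_iter_lipschitz].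
  - intros t Ht. rewrite <- (clamp_id t0 (t0 + k) t Ht) at 2 4. split.
    + apply (picard_map_limit f1 x0 X Y X Xn); auto.
    + apply (picard_map_limit f2 y0 X Y Y Yn); auto.
Qed.

End PicardLindelof.

(** * Comparison with a linear equation *)

Lemma exp_neg_le_1 u : 0 <= u -> exp (- u) <= 1.
Proof.
  intros Hu. rewrite <- exp_0. destruct (Req_dec u 0) as [->|]; [rewrite Ropp_0; lra|].
  left. apply exp_increasing. lra.
Qed.

Lemma exp_neg_lipschitz u1 u2 : 0 <= u1 -> 0 <= u2 ->
  Rabs (exp (- u1) - exp (- u2)) <= Rabs (u1 - u2).
Proof.
  assert (Hle : forall p q, 0 <= p <= q -> 0 <= exp (- p) - exp (- q) <= q - p).
  { intros p q Hpq. pose proof (exp_ineq1_le (p - q)). pose proof (exp_neg_le_1 p (proj1 Hpq)).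
    assert (exp (- q) = exp (- p) * exp (p - q)) by (rewrite <- exp_plus; f_equal; ring).
    pose proof (exp_pos (- p)).
    assert (exp (p - q) <= 1)
      by (replace (p - q) with (- (q - p)) by ring; apply exp_neg_le_1; lra).
    nra. }
  intros H1 H2. destruct (Rle_dec u1 u2).
  - pose proof (Hle u1 u2 (conj H1 r)). rewrite Rabs_right, Rabs_left1; lra.
  - pose proof (Hle u2 u1 (conj H2 (Rlt_le _ _ (Rnot_le_lt _ _ n)))).
    rewrite Rabs_left1, Rabs_right; lra.
Qed.

(* The weighted function [(y - Fu / gam) e^(gam u)] is nonincreasing.  [MVT_gen] may return
   an endpoint, where nothing is known about [F]; hence the [Rmin 0] in its derivative. *)
Lemma linear_comparison_upper (y F : R -> R) gam t0 t1 Fu :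
  0 < gam -> t0 <= t1 ->
  (forall s, t0 < s < t1 -> is_derive y s (F s - gam * y s)) ->
  (forall s, t0 <= s <= t1 -> continuous y s) ->
  (forall s, t0 < s < t1 -> F s <= Fu) ->
  y t1 <= Fu / gam + (y t0 - Fu / gam) * exp (- gam * (t1 - t0)).
Proof.
  intros Hg Ht Hd Hc HF.
  set (z := fun u => (y u - Fu / gam) * exp (gam * u)).
  destruct (MVT_gen z t0 t1 (fun u => Rmin 0 ((F u - Fu) * exp (gam * u)))) as [c [_ Hzc]].
  - rewrite Rmin_left, Rmax_right by lra. intros u Hu.
    rewrite Rmin_right by (pose proof (HF u Hu); pose proof (exp_pos (gam * u)); nra).
    replace ((F u - Fu) * exp (gam * u))
      with ((F u - gam * y u) * exp (gam * u) + (y u - Fu / gam) * (gam * exp (gam * u)))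
      by (field; lra).
    apply (is_derive_mult (fun u => y u - Fu / gam) (fun u => exp (gam * u))).
    + apply is_derive_Reals. rewrite <- (Rminus_0_r (F u - gam * y u)).
      apply (derivable_pt_lim_minus y (fun _ => Fu / gam));
        [apply is_derive_Reals, Hd, Hu | apply derivable_pt_lim_const].
    + auto_derive; [auto | ring].
    + intros; apply Rmult_comm.
  - rewrite Rmin_left, Rmax_right by lra. intros u Hu. apply continuity_pt_filterlim.
    apply (continuous_mult (K:=R_AbsRing) (fun u => y u - Fu / gam) (fun u => exp (gam * u))).
    + apply (continuous_minus (V:=R_NormedModule)); [apply Hc, Hu | apply continuous_const].
    + apply (ex_derive_continuous (K:=R_AbsRing) (V:=R_NormedModule)). auto_derive. auto.
  - pose proof (Rmin_l 0 ((F c - Fu) * exp (gam * c))).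
    assert (Hdec : z t1 <= z t0) by nra. unfold z in Hdec.
    pose proof (exp_pos (gam * t1)).
    assert (E : exp (- gam * (t1 - t0)) = exp (gam * t0) / exp (gam * t1)).
    { replace (gam * t0) with (- gam * (t1 - t0) + gam * t1) by ring. rewrite exp_plus.
      field. lra. }
    rewrite E. apply (Rmult_le_reg_r (exp (gam * t1))); auto.
    replace ((Fu / gam + (y t0 - Fu / gam) * (exp (gam * t0) / exp (gam * t1))) * exp (gam * t1))
      with (Fu / gam * exp (gam * t1) + (y t0 - Fu / gam) * exp (gam * t0)) by (field; lra).
    lra.
Qed.

Lemma linear_comparison (y F : R -> R) gam t0 t1 Fl Fu :
  0 < gam -> t0 <= t1 ->
  (forall s, t0 < s < t1 -> is_derive y s (F s - gam * y s)) ->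
  (forall s, t0 <= s <= t1 -> continuous y s) ->
  (forall s, t0 < s < t1 -> Fl <= F s <= Fu) ->
  Fl / gam + (y t0 - Fl / gam) * exp (- gam * (t1 - t0)) <= y t1 <=
  Fu / gam + (y t0 - Fu / gam) * exp (- gam * (t1 - t0)).
Proof.
  intros Hg Ht Hd Hc HF. split.
  - assert (H : - y t1 <= - Fl / gam + (- y t0 - - Fl / gam) * exp (- gam * (t1 - t0))).
    { apply (linear_comparison_upper (fun u => - y u) (fun u => - F u)); auto.
      - intros s Hs. replace (- F s - gam * - y s) with (- (F s - gam * y s)) by ring.
        apply (is_derive_opp y), Hd, Hs.
      - intros s Hs. apply (continuous_opp (V:=R_NormedModule)), Hc, Hs.
      - intros s Hs. pose proof (HF s Hs). lra. }
    replace (- Fl / gam + (- y t0 - - Fl / gam) * exp (- gam * (t1 - t0))) with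
      (- (Fl / gam + (y t0 - Fl / gam) * exp (- gam * (t1 - t0)))) in H by (field; lra).
    lra.
  - apply (linear_comparison_upper y F); auto. intros s Hs. apply HF, Hs.
Qed.

(** * One-sided derivatives and C^1 functions *)

Definition deriv_within_at (D : R -> Prop) (f : R -> R) (l s : R) : Prop :=
  forall eps, 0 < eps -> exists d, 0 < d /\ forall h, h <> 0 -> Rabs h < d -> D (s + h) ->
    Rabs ((f (s + h) - f s) / h - l) < eps.

Definition cont_within_at (D : R -> Prop) (f : R -> R) (s : R) : Prop :=
  forall eps, 0 < eps -> exists d, 0 < d /\ forall y, Rabs (y - s) < d -> D y ->
    Rabs (f y - f s) < eps.

Lemma has_deriv_within_iff (D : R -> Prop) f f' :
  has_deriv_within D f f' <-> forall s, D s -> deriv_within_at D f (f' s) s.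
Proof.
  split; intros H s Hs.
  - intros e He.
    destruct (proj1 (filterlim_locally _ _) (H s Hs) (mkposreal e He)) as [[d Hd] Hy].
    exists d. split; [exact Hd|]. intros h Hh Hhd HD. apply ball_R_Rabs, Hy; [|auto].
    apply ball_R_Rabs. rewrite Rminus_0_r; auto.
  - apply filterlim_locally. intros [e He]. destruct (H s Hs e He) as [d [Hd Hy]].
    exists (mkposreal d Hd). intros h Hb [Hh HD]. apply ball_R_Rabs, Hy; auto.
    apply ball_R_Rabs in Hb. simpl in Hb. replace h with (h - 0) by ring. exact Hb.
Qed.

Lemma cont_within_iff (D : R -> Prop) f :
  cont_within D f <-> forall s, D s -> cont_within_at D f s.
Proof.
  split; intros H s Hs.
  - intros e He.
    destruct (proj1 (filterlim_locally _ _) (H s Hs) (mkposreal e He)) as [[d Hd] Hy].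
    exists d. split; [exact Hd|]. intros y Hyd HD. apply ball_R_Rabs, Hy; [|exact HD].
    apply ball_R_Rabs, Hyd.
  - apply filterlim_locally. intros [e He]. destruct (H s Hs e He) as [d [Hd Hy]].
    exists (mkposreal d Hd). intros y Hb HD. apply ball_R_Rabs, Hy; [|exact HD].
    apply ball_R_Rabs in Hb. exact Hb.
Qed.

Lemma deriv_within_at_is_derive (D : R -> Prop) f l s rho :
  0 < rho -> (forall y, Rabs (y - s) < rho -> D y) -> deriv_within_at D f l s -> is_derive f s l.
Proof.
  intros Hr HD H. apply is_derive_Reals. intros e He. destruct (H e He) as [d [Hd Hy]].
  exists (mkposreal (Rmin d rho) (Rmin_pos _ _ Hd Hr)). simpl. intros h Hh Hhd.
  pose proof (Rmin_l d rho). pose proof (Rmin_r d rho).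
  apply Hy; [auto | lra | apply HD; replace (s + h - s) with h by ring; lra].
Qed.

Lemma is_derive_deriv_within_at (D : R -> Prop) f l s : is_derive f s l -> deriv_within_at D f l s.
Proof.
  intros H. apply is_derive_Reals in H. intros e He. destruct (H e He) as [[d Hd] Hy].
  exists d. split; auto.
Qed.

Lemma cont_within_at_continuous (D : R -> Prop) f s rho :
  0 < rho -> (forall y, Rabs (y - s) < rho -> D y) -> cont_within_at D f s -> continuous f s.
Proof.
  intros Hr HD H. apply continuous_eps. intros e He. destruct (H e He) as [d [Hd Hy]].
  exists (Rmin d rho). split; [apply Rmin_pos; auto|]. intros y Hyd.
  pose proof (Rmin_l d rho). pose proof (Rmin_r d rho). apply Hy; [lra | apply HD; lra].
Qed.

Lemma continuous_cont_within_at (D : R -> Prop) f s : continuous f s -> cont_within_at D f s.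
Proof.
  intros H e He. destruct (proj1 (continuous_eps f s) H e He) as [d [Hd Hy]].
  exists d; split; auto.
Qed.

Lemma deriv_within_at_cont_within_at (D : R -> Prop) f l s :
  deriv_within_at D f l s -> cont_within_at D f s.
Proof.
  intros H e He. destruct (H 1 Rlt_0_1) as [d [Hd Hy]].
  assert (Hl : 0 < Rabs l + 2) by (pose proof (Rabs_pos l); lra).
  exists (Rmin d (e / (Rabs l + 2))). split; [apply Rmin_pos; auto; apply Rdiv_lt_0_compat; lra|].
  intros y Hyd HD. pose proof (Rmin_l d (e / (Rabs l + 2))).
  pose proof (Rmin_r d (e / (Rabs l + 2))).
  destruct (Req_dec y s) as [->|Hys]; [rewrite Rminus_diag, Rabs_R0; auto|].
  specialize (Hy (y - s)). replace (s + (y - s)) with y in Hy by ring.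
  assert (Hq : Rabs ((f y - f s) / (y - s) - l) < 1) by (apply Hy; auto; lra).
  replace (f y - f s) with (((f y - f s) / (y - s) - l + l) * (y - s)) by (field; lra).
  rewrite Rabs_mult.
  assert (Rabs ((f y - f s) / (y - s) - l + l) <= Rabs l + 2)
    by (eapply Rle_trans; [apply Rabs_triang | lra]).
  assert (Hz : Rabs (y - s) < e / (Rabs l + 2)) by lra.
  apply (Rmult_lt_compat_l (Rabs l + 2)) in Hz; [|lra].
  replace ((Rabs l + 2) * (e / (Rabs l + 2))) with e in Hz by (field; lra).
  pose proof (Rabs_pos (y - s)). nra.
Qed.

Lemma deriv_within_at_transfer (D D1 : R -> Prop) X f l s rho :
  0 < rho -> deriv_within_at D1 f l s ->
  (forall h, h <> 0 -> Rabs h < rho -> D (s + h) -> D1 (s + h) /\ X (s + h) = f (s + h)) ->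
  X s = f s -> deriv_within_at D X l s.
Proof.
  intros Hr H HX Hs e He. destruct (H e He) as [d [Hd Hy]].
  exists (Rmin d rho). split; [apply Rmin_pos; auto|]. intros h Hh Hhd HD.
  pose proof (Rmin_l d rho). pose proof (Rmin_r d rho).
  destruct (HX h Hh ltac:(lra) HD) as [HD1 E]. rewrite E, Hs. apply Hy; auto; lra.
Qed.

Lemma cont_within_at_transfer (D D1 : R -> Prop) X f s rho :
  0 < rho -> cont_within_at D1 f s ->
  (forall y, Rabs (y - s) < rho -> D y -> D1 y /\ X y = f y) -> X s = f s ->
  cont_within_at D X s.
Proof.
  intros Hr H HX Hs e He. destruct (H e He) as [d [Hd Hy]].
  exists (Rmin d rho). split; [apply Rmin_pos; auto|]. intros y Hyd HD.
  pose proof (Rmin_l d rho). pose proof (Rmin_r d rho).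
  destruct (HX y ltac:(lra) HD) as [HD1 E]. rewrite E, Hs. apply Hy; auto; lra.
Qed.

Lemma deriv_within_at_split (D : R -> Prop) X l s :
  deriv_within_at (fun y => y <= s /\ D y) X l s ->
  deriv_within_at (fun y => s <= y /\ D y) X l s ->
  deriv_within_at D X l s.
Proof.
  intros H1 H2 e He. destruct (H1 e He) as [d1 [Hd1 Hy1]]. destruct (H2 e He) as [d2 [Hd2 Hy2]].
  exists (Rmin d1 d2). split; [apply Rmin_pos; auto|]. intros h Hh Hhd HD.
  pose proof (Rmin_l d1 d2). pose proof (Rmin_r d1 d2).
  destruct (Rle_dec h 0); [apply Hy1 | apply Hy2]; auto; try lra; split; auto; lra.
Qed.

Lemma cont_within_at_split (D : R -> Prop) X s :
  cont_within_at (fun y => y <= s /\ D y) X s -> cont_within_at (fun y => s <= y /\ D y) X s ->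
  cont_within_at D X s.
Proof.
  intros H1 H2 e He. destruct (H1 e He) as [d1 [Hd1 Hy1]]. destruct (H2 e He) as [d2 [Hd2 Hy2]].
  exists (Rmin d1 d2). split; [apply Rmin_pos; auto|]. intros y Hyd HD.
  pose proof (Rmin_l d1 d2). pose proof (Rmin_r d1 d2).
  destruct (Rle_dec y s); [apply Hy1 | apply Hy2]; auto; try lra; split; auto; lra.
Qed.

Lemma is_derive_integral_eq (X F : R -> R) c0 t0 lo hi t : lo < t < hi ->
  (forall u, lo <= u <= hi -> X u = c0 + RInt F t0 u) -> (forall x, continuous F x) ->
  is_derive X t (F t).
Proof.
  intros Ht HX HF.
  assert (HI : is_derive (fun u => c0 + RInt F t0 u) t (F t)).
  { rewrite <- (Rplus_0_l (F t)). apply (is_derive_plus (fun _ => c0) (fun u => RInt F t0 u)).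
    - exact (is_derive_const (K:=R_AbsRing) c0 t).
    - apply (is_derive_RInt (V:=R_CompleteNormedModule) F _ t0); [|apply HF].
      exists (mkposreal 1 Rlt_0_1). intros.
      apply (RInt_correct (V:=R_CompleteNormedModule)), ex_RInt_continuous_R, HF. }
  eapply is_derive_ext_loc; [|exact HI].
  assert (He : 0 < Rmin (t - lo) (hi - t)) by (apply Rmin_pos; lra).
  pose proof (Rmin_l (t - lo) (hi - t)). pose proof (Rmin_r (t - lo) (hi - t)).
  set (m := Rmin (t - lo) (hi - t)) in *.
  exists (mkposreal m He). intros y Hy. apply ball_R_Rabs in Hy. change (Rabs (y - t) < m) in Hy.
  apply Rabs_lt_between in Hy. symmetry. apply HX. lra.
Qed.

Lemma continuous_bounded_on (f : R -> R) lo hi : lo <= hi ->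
  (forall x, lo <= x <= hi -> continuous f x) ->
  exists C, forall x, lo <= x <= hi -> Rabs (f x) <= C.
Proof.
  intros Hlh Hc.
  destruct (continuity_ab_maj (fun x => Rabs (f x)) lo hi Hlh) as [m [Hm _]].
  - intros x Hx. apply continuity_pt_filterlim, (continuous_comp f Rabs), continuous_Rabs.
    apply Hc, Hx.
  - exists (Rabs (f m)). exact Hm.
Qed.

Lemma lipschitz_of_derive_bound (f f' : R -> R) lo hi C :
  (forall x, lo < x < hi -> is_derive f x (f' x)) ->
  (forall x, lo <= x <= hi -> continuous f x) ->
  (forall x, lo <= x <= hi -> Rabs (f' x) <= C) ->
  forall x y, lo <= x <= hi -> lo <= y <= hi -> Rabs (f x - f y) <= C * Rabs (x - y).
Proof.
  intros Hd Hc Hb x y Hx Hy.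
  assert (Hmin : lo <= Rmin y x) by (apply Rmin_glb; lra).
  assert (Hmax : Rmax y x <= hi) by (apply Rmax_lub; lra).
  destruct (MVT_gen f y x f') as [c [Hcxy E]].
  - intros z Hz. apply Hd. lra.
  - intros z Hz. apply continuity_pt_filterlim, Hc. lra.
  - rewrite E, Rabs_mult. apply Rmult_le_compat_r; [apply Rabs_pos | apply Hb; lra].
Qed.

Lemma C1_R_lipschitz_on (f : R -> R) A : C1_R f -> 0 <= A ->
  exists Lf, 0 <= Lf /\
    forall x y, - A <= x <= A -> - A <= y <= A -> Rabs (f x - f y) <= Lf * Rabs (x - y).
Proof.
  intros [f' Hf] HA.
  destruct (continuous_bounded_on f' (- A) A) as [C HC]; [lra | intros; apply Hf|].
  exists (Rmax 0 C). split; [apply Rmax_l|].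
  apply (lipschitz_of_derive_bound f f').
  - intros; apply Hf.
  - intros x _. apply (ex_derive_continuous (K:=R_AbsRing) (V:=R_NormedModule)).
    eexists; apply Hf.
  - intros x Hx. eapply Rle_trans; [apply HC, Hx | apply Rmax_r].
Qed.

Lemma C1_R_continuous (f : R -> R) : C1_R f -> forall x, continuous f x.
Proof.
  intros [f' Hf] x. apply (ex_derive_continuous (K:=R_AbsRing) (V:=R_NormedModule)).
  eexists; apply Hf.
Qed.

Lemma continuous_clamp_cont_within (f : R -> R) lo hi x : lo <= hi ->
  (forall s, lo <= s <= hi -> cont_within_at (fun s => lo <= s <= hi) f s) ->
  continuous (fun y => f (clamp lo hi y)) x.
Proof.
  intros Hlh H. apply continuous_eps. intros e He.
  destruct (H (clamp lo hi x) (clamp_in lo hi x Hlh) e He) as [d [Hd Hy]].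
  exists d. split; [exact Hd|]. intros y Hyx. apply Hy; [|apply clamp_in, Hlh].
  eapply Rle_lt_trans; [|exact Hyx]. pose proof (clamp_lipschitz lo hi y x). lra.
Qed.

Lemma is_derive_clamp_interior (f : R -> R) l lo hi x : lo < x < hi ->
  deriv_within_at (fun s => lo <= s <= hi) f l x -> is_derive (fun s => f (clamp lo hi s)) x l.
Proof.
  intros Hx Hd. set (rho := Rmin (x - lo) (hi - x)).
  assert (Hrho : 0 < rho) by (apply Rmin_pos; lra).
  assert (Hball : forall y, Rabs (y - x) < rho -> lo <= y <= hi).
  { intros y Hy. pose proof (Rmin_l (x - lo) (hi - x)) as H1.
    pose proof (Rmin_r (x - lo) (hi - x)) as H2. fold rho in H1, H2.
    apply Rabs_lt_between in Hy. lra. }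
  apply (is_derive_ext_loc f).
  - exists (mkposreal rho Hrho). intros y Hy. apply ball_R_Rabs in Hy.
    rewrite clamp_id; [reflexivity | apply Hball, Hy].
  - exact (deriv_within_at_is_derive _ f l x rho Hrho Hball Hd).
Qed.

Lemma C1_on_interval_clamp_lipschitz (phi dphi : R -> R) lo hi : lo < hi ->
  C1_on (fun s => lo <= s <= hi) phi dphi ->
  exists K, lipschitz (fun s => phi (clamp lo hi s)) K.
Proof.
  intros Hlh [Hd Hc].
  rewrite has_deriv_within_iff in Hd. rewrite cont_within_iff in Hc.
  destruct (continuous_bounded_on (fun s => dphi (clamp lo hi s)) lo hi) as [C HC];
    [lra | intros; apply continuous_clamp_cont_within; [lra | exact Hc] |].
  exists (Rmax 0 C). intros s1 s2.
  assert (Hclamp : forall s, lo <= clamp lo hi s <= hi) by (intros; apply clamp_in; lra).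
  eapply Rle_trans.
  - rewrite <- (clamp_id lo hi (clamp lo hi s1)), <- (clamp_id lo hi (clamp lo hi s2)) at 1
      by apply Hclamp.
    apply (lipschitz_of_derive_bound (fun s => phi (clamp lo hi s)) (fun s => dphi (clamp lo hi s))
      lo hi (Rmax 0 C)); try apply Hclamp.
    + intros x Hx. rewrite (clamp_id lo hi x) by lra.
      apply is_derive_clamp_interior; [exact Hx | apply Hd; lra].
    + intros x _. apply continuous_clamp_cont_within; [lra|].
      intros s Hs. apply (deriv_within_at_cont_within_at _ _ (dphi s)), Hd, Hs.
    + intros x Hx. eapply Rle_trans; [apply HC, Hx | apply Rmax_r].
  - apply Rmult_le_compat_l; [apply Rmax_l|]. pose proof (clamp_lipschitz lo hi s1 s2). lra.
Qed.

Lemma lipschitz_clamp_bound (f : R -> R) lo hi K : lo <= hi ->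
  lipschitz (fun s => f (clamp lo hi s)) K ->
  forall s, Rabs (f (clamp lo hi s)) <= Rabs (f lo) + K * (hi - lo).
Proof.
  intros Hlh HK s. pose proof (HK (clamp lo hi s) lo) as H. cbv beta in H.
  pose proof (clamp_in lo hi s Hlh).
  rewrite (clamp_id lo hi (clamp lo hi s)), (clamp_id lo hi lo) in H by lra.
  rewrite (Rabs_right (clamp lo hi s - lo)) in H by lra. pose proof (lipschitz_nonneg _ _ HK).
  assert (K * (clamp lo hi s - lo) <= K * (hi - lo)) by (apply Rmult_le_compat_l; lra).
  pose proof (Rabs_triang_inv (f (clamp lo hi s)) (f lo)). lra.
Qed.

(** * The state-dependent delay *)

Section Delay.

(* All lemmas of the section take all its hypotheses, so that call sites are uniform. *)
#[local] Set Default Proof Using "All".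

Variables (a r v0 vU : R) (v : R -> R).
Hypotheses (ha : 0 < a) (hv0 : 0 < v0) (hvb : forall x, v0 <= v x <= vU)
  (hvc : forall x, continuous v x) (hr : a / v0 < r).

Lemma a_lt_v0_mul_r : a < v0 * r.
Proof.
  apply (Rmult_lt_compat_l v0) in hr; auto.
  replace (v0 * (a / v0)) with a in hr by (field; lra). exact hr.
Qed.

Lemma delay_horizon_pos : 0 < r.
Proof. pose proof a_lt_v0_mul_r. nra. Qed.

Section Integral.

Variables (Z : R -> R) (lo hi : R).
Hypothesis (hZ : forall s, lo <= s <= hi -> continuous Z s).

Lemma ex_RInt_v_comp p q : lo <= p <= hi -> lo <= q <= hi -> ex_RInt (fun u => v (Z u)) p q.
Proof.
  intros Hp Hq. apply (ex_RInt_continuous (V:=R_CompleteNormedModule)). intros s Hs.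
  apply (continuous_comp Z v); [apply hZ | apply hvc].
  revert Hs; unfold Rmin, Rmax; destruct Rle_dec; lra.
Qed.

Lemma RInt_v_comp_bounds p q : lo <= p <= q -> q <= hi ->
  v0 * (q - p) <= RInt (fun u => v (Z u)) p q <= vU * (q - p).
Proof.
  intros Hp Hq.
  assert (Hc : forall c, RInt (fun _ => c) p q = c * (q - p)).
  { intros c. rewrite RInt_const. unfold scal; simpl; unfold mult; simpl. ring. }
  rewrite <- !Hc. split; apply RInt_le; try lra; try apply ex_RInt_const;
    try (apply ex_RInt_v_comp; lra); intros; apply hvb.
Qed.

Lemma RInt_v_comp_Chasles p q w : lo <= p <= hi -> lo <= q <= hi -> lo <= w <= hi ->
  RInt (fun u => v (Z u)) p q + RInt (fun u => v (Z u)) q w = RInt (fun u => v (Z u)) p w.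
Proof.
  intros Hp Hq Hw. apply (RInt_Chasles (V:=R_CompleteNormedModule)); apply ex_RInt_v_comp; auto.
Qed.

Lemma RInt_v_comp_diff s1 s2 : lo <= s1 <= hi -> lo <= s2 <= hi ->
  RInt (fun u => v (Z u)) s1 hi - RInt (fun u => v (Z u)) s2 hi = RInt (fun u => v (Z u)) s1 s2.
Proof.
  intros H1 H2. rewrite <- (RInt_v_comp_Chasles s1 s2 hi) by lra. apply Rplus_minus_r.
Qed.

Lemma RInt_v_comp_start_lipschitz : lo <= hi ->
  lipschitz (fun c => RInt (fun u => v (Z u)) (clamp lo hi c) hi) vU.
Proof.
  intros Hlh c1 c2.
  pose proof (clamp_in lo hi c1 Hlh). pose proof (clamp_in lo hi c2 Hlh).
  rewrite RInt_v_comp_diff by lra.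
  eapply Rle_trans.
  - apply (abs_RInt_le_const_abs _ _ _ vU); [apply ex_RInt_v_comp; lra|].
    intros t _. pose proof (hvb (Z t)). rewrite Rabs_right; lra.
  - pose proof (clamp_lipschitz lo hi c2 c1). pose proof (hvb 0).
    rewrite (Rabs_minus_sym c1). apply Rmult_le_compat_l; lra.
Qed.

Lemma RInt_v_comp_start_colipschitz s1 s2 : lo <= s1 <= hi -> lo <= s2 <= hi ->
  v0 * Rabs (s1 - s2) <=
  Rabs (RInt (fun u => v (Z u)) s1 hi - RInt (fun u => v (Z u)) s2 hi).
Proof.
  intros H1 H2. rewrite RInt_v_comp_diff by lra.
  destruct (Rle_dec s1 s2).
  - pose proof (RInt_v_comp_bounds s1 s2 ltac:(lra) ltac:(lra)).
    rewrite Rabs_left1, Rabs_right by nra. lra.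
  - pose proof (RInt_v_comp_bounds s2 s1 ltac:(lra) ltac:(lra)).
    rewrite <- (opp_RInt_swap (V:=R_CompleteNormedModule)) by (apply ex_RInt_v_comp; lra).
    unfold opp; simpl. rewrite Rabs_Ropp, !Rabs_right by nra. lra.
Qed.

End Integral.

(* [tau] inverts [s |-> RInt (v o Z) s T]: once [V] of the threshold [a] has been covered
   after [T], the delayed time of the next step is [tau V]. *)
Lemma delay_inverse_exists (Z : R -> R) T : 0 <= T ->
  (forall s, - r <= s <= T -> continuous Z s) ->
  exists tau : R -> R, (forall V, - r <= tau V <= T) /\ lipschitz tau (/ v0) /\
    (forall V, 0 <= V <= a -> RInt (fun u => v (Z u)) (tau V) T = a - V).
Proof.
  intros HT Hc. pose proof delay_horizon_pos. pose proof a_lt_v0_mul_r.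
  set (W := fun c => RInt (fun u => v (Z u)) (clamp (- r) T c) T).
  assert (Wc : continuity W).
  { intros x. apply continuity_pt_filterlim, (lipschitz_continuous W vU).
    apply (RInt_v_comp_start_lipschitz Z (- r) T Hc). lra. }
  assert (WT : W T = 0) by (unfold W; rewrite clamp_id by lra; apply RInt_point_R).
  assert (Wr : v0 * (T - - r) <= W (- r)).
  { unfold W. rewrite clamp_id by lra. apply (RInt_v_comp_bounds Z (- r) T Hc); lra. }
  assert (Hy : forall y, Rmin (W (- r)) (W T) <= clamp 0 a y <= Rmax (W (- r)) (W T)).
  { intros y. pose proof (clamp_in 0 a y). rewrite WT, Rmin_right, Rmax_left by nra. nra. }
  set (tau := fun V => proj1_sig (IVT_gen W (- r) T (clamp 0 a (a - V)) Wc (Hy (a - V)))).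
  assert (Htau : forall V, - r <= tau V <= T /\ W (tau V) = clamp 0 a (a - V)).
  { intros V. unfold tau. destruct (IVT_gen _ _ _ _ _ _) as [s [Hs E]]. simpl.
    rewrite Rmin_left, Rmax_right in Hs by lra. auto. }
  assert (HW : forall V, W (tau V) = RInt (fun u => v (Z u)) (tau V) T)
    by (intros V; unfold W; rewrite clamp_id; [reflexivity | apply Htau]).
  exists tau. split; [|split].
  - apply Htau.
  - intros V1 V2. destruct (Htau V1) as [R1 E1]. destruct (Htau V2) as [R2 E2].
    pose proof (RInt_v_comp_start_colipschitz Z (- r) T Hc _ _ R1 R2) as Hgap.
    rewrite <- !HW, E1, E2 in Hgap.
    pose proof (clamp_lipschitz 0 a (a - V1) (a - V2)) as Hclamp.
    replace (a - V1 - (a - V2)) with (- (V1 - V2)) in Hclamp by ring.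
    rewrite Rabs_Ropp in Hclamp.
    apply (Rmult_le_reg_l v0); auto. rewrite <- Rmult_assoc, Rinv_r, Rmult_1_l by lra. lra.
  - intros V HV. rewrite <- HW, (proj2 (Htau V)). apply clamp_id. lra.
Qed.

Lemma delta_exists (Z : R -> R) : (forall s, - r <= s <= 0 -> continuous Z s) ->
  exists u, 0 < u < r /\ RInt (fun s => v (Z s)) (- u) 0 = a.
Proof.
  intros HZ. pose proof delay_horizon_pos. pose proof a_lt_v0_mul_r.
  destruct (delay_inverse_exists Z 0 (Rle_refl 0) HZ) as [tau [Hr [_ Htau]]].
  specialize (Htau 0 ltac:(lra)). rewrite Rminus_0_r in Htau. specialize (Hr 0).
  exists (- tau 0). rewrite Ropp_involutive. split; [split|exact Htau].
  - destruct (Req_dec (tau 0) 0) as [E|E]; [|lra].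
    rewrite E, RInt_point_R in Htau. lra.
  - destruct (Req_dec (tau 0) (- r)) as [E|E]; [|lra].
    pose proof (RInt_v_comp_bounds Z (- r) 0 HZ (tau 0) 0 ltac:(lra) ltac:(lra)). nra.
Qed.

Lemma delta_unique (Z : R -> R) u1 u2 : (forall s, - r <= s <= 0 -> continuous Z s) ->
  0 < u1 < r -> RInt (fun s => v (Z s)) (- u1) 0 = a ->
  0 < u2 < r -> RInt (fun s => v (Z s)) (- u2) 0 = a -> u1 = u2.
Proof.
  intros HZ H1 E1 H2 E2.
  pose proof (RInt_v_comp_start_colipschitz Z (- r) 0 HZ (- u1) (- u2) ltac:(lra) ltac:(lra))
    as Hgap.
  rewrite E1, E2, Rminus_diag, Rabs_R0 in Hgap.
  pose proof (Rabs_pos (- u1 - - u2)).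
  assert (E : Rabs (- u1 - - u2) = 0) by nra. apply Rabs_eq_0 in E. lra.
Qed.

Lemma delta_eq (Z : R -> R) u : (forall s, - r <= s <= 0 -> continuous Z s) ->
  0 < u < r -> RInt (fun s => v (Z s)) (- u) 0 = a -> delta a r v Z = u.
Proof.
  intros HZ Hu E. unfold delta.
  destruct (epsilon_spec (inhabits 0) (fun u => 0 < u < r /\ RInt (fun s => v (Z s)) (- u) 0 = a)
    (ex_intro _ u (conj Hu E))) as [H1 H2].
  eapply delta_unique; eauto.
Qed.

Lemma delta_spec (Z : R -> R) : (forall s, - r <= s <= 0 -> continuous Z s) ->
  RInt (fun s => v (Z s)) (- delta a r v Z) 0 = a /\ a / vU <= delta a r v Z <= a / v0 /\
  delta a r v Z < r.
Proof.
  intros HZ. destruct (delta_exists Z HZ) as [u [Hu E]].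
  rewrite (delta_eq Z u HZ Hu E).
  pose proof (RInt_v_comp_bounds Z (- r) 0 HZ (- u) 0 ltac:(lra) ltac:(lra)) as Hb.
  rewrite E in Hb.
  pose proof (hvb 0).
  split; [exact E|]. split; [split|lra].
  - apply (Rmult_le_reg_l vU); [lra|]. replace (vU * (a / vU)) with a by (field; lra). lra.
  - apply (Rmult_le_reg_l v0); [lra|]. replace (v0 * (a / v0)) with a by (field; lra). lra.
Qed.

Lemma delta_ext (Z1 Z2 : R -> R) : (forall s, - r <= s <= 0 -> Z1 s = Z2 s) ->
  delta a r v Z1 = delta a r v Z2.
Proof.
  intros HZ. unfold delta. f_equal. apply functional_extensionality. intros u.
  apply propositional_extensionality. split; intros [Hu E]; split; auto; rewrite <- E;
    apply RInt_ext; rewrite Rmin_left, Rmax_right by lra; intros x Hx; rewrite HZ; auto; lra.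
Qed.

Lemma G_ext beta mu gamma g (Z1 Z2 : R -> R) : (forall s, - r <= s <= 0 -> continuous Z1 s) ->
  (forall s, - r <= s <= 0 -> Z1 s = Z2 s) ->
  G beta mu gamma a r g v Z1 = G beta mu gamma a r g v Z2.
Proof.
  intros Hc HZ. unfold G. rewrite <- (delta_ext Z1 Z2 HZ).
  destruct (delta_spec Z1 Hc) as [_ [Hd Hdr]]. pose proof delay_horizon_pos.
  assert (0 < a / vU) by (pose proof (hvb 0); apply Rdiv_lt_0_compat; lra).
  rewrite <- !HZ by lra. reflexivity.
Qed.

End Delay.

(** * Existence by the method of steps *)

Section Existence.

Variables (beta mu gamma a r gU v0 vU M K Lv Lg : R) (g v phi : R -> R).
Hypotheses (hbeta : 0 < beta) (hmu : 0 < mu) (hgamma : 0 < gamma) (ha : 0 < a)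
  (hv0 : 0 < v0) (hvb : forall x, v0 <= v x <= vU) (hr : a / v0 < r)
  (hgb : forall x, 0 < g x <= gU) (hvc : forall x, continuous v x)
  (hMdU : beta * gU * (vU / v0) / gamma <= M)
  (hLv : forall x y, - (M + 1) <= x <= M + 1 -> - (M + 1) <= y <= M + 1 ->
     Rabs (v x - v y) <= Lv * Rabs (x - y))
  (hLg : forall x y, - (M + 1) <= x <= M + 1 -> - (M + 1) <= y <= M + 1 ->
     Rabs (g x - g y) <= Lg * Rabs (x - y))
  (hLv0 : 0 <= Lv) (hLg0 : 0 <= Lg).

Let GG := G beta mu gamma a r g v.
Let r_pos : 0 < r := delay_horizon_pos a r v0 vU v ha hv0 hvb hvc hr.
Let RInt_v_bounds := RInt_v_comp_bounds a r v0 vU v ha hv0 hvb hvc hr.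
Let GG_ext := G_ext a r v0 vU v ha hv0 hvb hvc hr beta mu gamma g.

(* Bounds the right-hand sides of the auxiliary systems, hence the slopes of all the
   approximate solutions. *)
Definition rhs_bound : R := beta * gU * (vU / v0) + gamma * (M + 1) + vU.

Hypotheses (hK : rhs_bound <= K)
  (hphiM : forall s, Rabs (phi (clamp (- r) 0 s)) <= M)
  (hphiK : lipschitz (fun s => phi (clamp (- r) 0 s)) K).

(* These Lipschitz constants are written exactly as the product and composition rules
   of the Lipschitz bounds produce them. *)
Definition delay_factor_lip : R :=
  mu * / v0 * (gU * / v0) + 1 * (Lg * (K * / v0) * / v0 + gU * (Lv * (K * / v0) / v0 ^ 2)).

Definition rhs_lip : R :=
  beta * (Lv * 1 * (gU * / v0) + vU * delay_factor_lip) + gamma * 1 + Lv.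

Definition step : R := Rmin (a / vU) (Rmin (1 / rhs_bound) (1 / (4 * rhs_lip))).

Lemma vU_pos : 0 < vU. Proof. pose proof (hvb 0). lra. Qed.
Lemma gU_pos : 0 < gU. Proof. pose proof (hgb 0). lra. Qed.

Lemma dU_pos : 0 < beta * gU * (vU / v0).
Proof.
  pose proof vU_pos. pose proof gU_pos.
  apply Rmult_lt_0_compat; [nra | apply Rdiv_lt_0_compat; lra].
Qed.

Lemma M_nonneg : 0 <= M.
Proof.
  pose proof dU_pos. eapply Rle_trans; [|exact hMdU]. apply Rlt_le, Rdiv_lt_0_compat; lra.
Qed.

Lemma rhs_bound_pos : 0 < rhs_bound.
Proof. unfold rhs_bound. pose proof dU_pos. pose proof vU_pos. pose proof M_nonneg. nra. Qed.

Lemma K_pos : 0 < K. Proof. pose proof rhs_bound_pos. lra. Qed.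

Lemma rhs_lip_bounds : beta * (Lv * 1 * (gU * / v0) + vU * delay_factor_lip) + gamma * 1
  <= rhs_lip /\ Lv <= rhs_lip /\ 0 < rhs_lip.
Proof.
  pose proof vU_pos. pose proof gU_pos. pose proof K_pos.
  assert (Hi : 0 < / v0) by (apply Rinv_0_lt_compat; lra).
  assert (0 <= delay_factor_lip).
  { unfold delay_factor_lip, Rdiv.
    assert (0 < / v0 ^ 2) by (apply Rinv_0_lt_compat; nra).
    assert (0 <= Lg * (K * / v0) * / v0) by (repeat apply Rmult_le_pos; lra).
    assert (0 <= gU * (Lv * (K * / v0) * / v0 ^ 2)) by (repeat apply Rmult_le_pos; lra).
    assert (0 <= mu * / v0 * (gU * / v0)) by (repeat apply Rmult_le_pos; lra).
    lra. }
  assert (0 <= beta * (Lv * 1 * (gU * / v0) + vU * delay_factor_lip)).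
  { apply Rmult_le_pos; [lra|].
    assert (0 <= Lv * 1 * (gU * / v0)) by (repeat apply Rmult_le_pos; lra).
    nra. }
  unfold rhs_lip. lra.
Qed.

Lemma step_pos : 0 < step.
Proof.
  unfold step. pose proof vU_pos. pose proof rhs_bound_pos. destruct rhs_lip_bounds as [_ [_ HL]].
  repeat apply Rmin_pos; apply Rdiv_lt_0_compat; lra.
Qed.

Lemma step_le_delay : step <= a / vU.
Proof. apply Rmin_l. Qed.

Lemma step_mul_rhs_bound : step * rhs_bound <= 1.
Proof.
  pose proof rhs_bound_pos.
  assert (Hs : step <= 1 / rhs_bound) by (eapply Rle_trans; [apply Rmin_r | apply Rmin_l]).
  apply (Rmult_le_compat_r rhs_bound) in Hs; [|lra].
  replace (1 / rhs_bound * rhs_bound) with 1 in Hs by (field; lra). lra.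
Qed.

Lemma step_mul_rhs_lip : 4 * step * rhs_lip <= 1.
Proof.
  destruct rhs_lip_bounds as [_ [_ HL]].
  assert (Hs : step <= 1 / (4 * rhs_lip)) by (eapply Rle_trans; [apply Rmin_r | apply Rmin_r]).
  apply (Rmult_le_compat_r (4 * rhs_lip)) in Hs; [|lra].
  replace (1 / (4 * rhs_lip) * (4 * rhs_lip)) with 1 in Hs by (field; lra). lra.
Qed.

Definition rhs_upto (T : R) (Y : R -> R) (s : R) : R := GG (seg Y (clamp 0 T s)).

(* The right-hand side is frozen after [T], so that it is continuous on the whole line. *)
Record solution_upto (T : R) (Y : R -> R) : Prop := {
  upto_nonneg : 0 <= T;
  upto_init : forall s, - r <= s <= 0 -> Y s = phi s;
  upto_bound : forall s, Rabs (Y s) <= M;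
  upto_lipschitz : lipschitz Y K;
  upto_integral : forall t, 0 <= t <= T -> Y t = phi 0 + RInt (rhs_upto T Y) 0 t;
  upto_rhs_continuous : forall s, continuous (rhs_upto T Y) s }.

Lemma solution_upto_0 : solution_upto 0 (fun s => phi (clamp (- r) 0 s)).
Proof.
  pose proof r_pos.
  constructor; auto; [lra | intros; rewrite clamp_id; auto | |].
  - intros t Ht. replace t with 0 by lra. rewrite RInt_point_R, clamp_id by lra. ring.
  - intros x. unfold rhs_upto.
    apply (continuous_ext (fun _ => GG (seg (fun s => phi (clamp (- r) 0 s)) 0))).
    + intros y. rewrite clamp_point. reflexivity.
    + apply continuous_const.
Qed.

Section Step.

Variables (T : R) (Y tau : R -> R).
Hypotheses (hY : solution_upto T Y) (htau_range : forall V, - r <= tau V <= T)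
  (htau_lip : lipschitz tau (/ v0))
  (htau_int : forall V, 0 <= V <= a -> RInt (fun u => v (Y u)) (tau V) T = a - V).

Let Y_continuous s : continuous Y s := lipschitz_continuous Y K (upto_lipschitz _ _ hY) s.

Lemma Y_in_box s : - (M + 1) <= Y s <= M + 1.
Proof. pose proof (upto_bound _ _ hY s) as Hs. apply Rabs_le_between in Hs. lra. Qed.

Let cx x := clamp (- (M + 1)) (M + 1) x.
Let ct t := clamp T (T + step) t.

Lemma cx_in x : - (M + 1) <= cx x <= M + 1.
Proof. apply clamp_in. pose proof M_nonneg. lra. Qed.

Lemma ct_ge t : T <= ct t.
Proof. pose proof step_pos. apply clamp_in. lra. Qed.

(* At time [t] of the step, [V] is the integral of [v (x u)] over [T, t] and the delayed
   time is [tau V]; this factor collects everything in [G] that depends on [V]. *)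
Definition delay_factor (t V : R) : R :=
  exp (- mu * (ct t - tau V)) * (g (Y (tau V)) * / v (Y (tau V))).

Definition step_rhs_x (t x V : R) : R := beta * (v (cx x) * delay_factor t V) - gamma * cx x.
Definition step_rhs_V (t x V : R) : R := v (cx x).

Lemma delay_exp_bounds t V : 0 < exp (- mu * (ct t - tau V)) <= 1.
Proof.
  pose proof (ct_ge t). pose proof (htau_range V). split; [apply exp_pos|].
  replace (- mu * (ct t - tau V)) with (- (mu * (ct t - tau V))) by ring.
  apply exp_neg_le_1. nra.
Qed.

Lemma delay_ratio_bounds V : 0 < g (Y (tau V)) * / v (Y (tau V)) <= gU * / v0.
Proof.
  pose proof (hgb (Y (tau V))). pose proof (hvb (Y (tau V))).
  assert (0 < / v (Y (tau V)) <= / v0)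
    by (split; [apply Rinv_0_lt_compat | apply Rinv_le_contravar]; lra).
  split; [nra|]. apply Rmult_le_compat; lra.
Qed.

Lemma delay_factor_bounds t V : 0 < delay_factor t V <= gU * / v0.
Proof.
  pose proof (delay_exp_bounds t V). pose proof (delay_ratio_bounds V). unfold delay_factor.
  split; [nra|]. apply Rle_trans with (1 * (gU * / v0)); [apply Rmult_le_compat|]; lra.
Qed.

Lemma delay_factor_lipschitz t : lipschitz (delay_factor t) delay_factor_lip.
Proof.
  pose proof (upto_lipschitz _ _ hY) as HYl.
  assert (HYtau : lipschitz (fun V => Y (tau V)) (K * / v0)) by (apply lipschitz_comp; auto).
  assert (HE : lipschitz (fun V => exp (- mu * (ct t - tau V))) (mu * / v0)).
  { intros V1 V2. pose proof (ct_ge t). pose proof (htau_range V1). pose proof (htau_range V2).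
    replace (- mu * (ct t - tau V1)) with (- (mu * (ct t - tau V1))) by ring.
    replace (- mu * (ct t - tau V2)) with (- (mu * (ct t - tau V2))) by ring.
    eapply Rle_trans; [apply exp_neg_lipschitz; nra|].
    replace (mu * (ct t - tau V1) - mu * (ct t - tau V2)) with (mu * (tau V2 - tau V1)) by ring.
    rewrite Rabs_mult, Rabs_right, Rmult_assoc by lra. apply Rmult_le_compat_l; [lra|].
    rewrite Rabs_minus_sym. apply (htau_lip V1 V2). }
  assert (HN : lipschitz (fun V => g (Y (tau V))) (Lg * (K * / v0)))
    by (apply (lipschitz_comp_on g _ (- (M + 1)) (M + 1)); auto; intros; apply Y_in_box).
  assert (HD : lipschitz (fun V => / v (Y (tau V))) (Lv * (K * / v0) / v0 ^ 2)).
  { apply lipschitz_inv; [exact hv0 | intros; apply hvb|].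
    apply (lipschitz_comp_on v _ (- (M + 1)) (M + 1)); auto; intros; apply Y_in_box. }
  apply lipschitz_mul; [exact HE | | |].
  - apply lipschitz_mul; auto.
    + intros V. pose proof (hgb (Y (tau V))). rewrite Rabs_right; lra.
    + intros V. pose proof (hvb (Y (tau V))).
      rewrite Rabs_right by (left; apply Rinv_0_lt_compat; lra). apply Rinv_le_contravar; lra.
  - intros V. pose proof (delay_exp_bounds t V). rewrite Rabs_right; lra.
  - intros V. pose proof (delay_ratio_bounds V). rewrite Rabs_right; lra.
Qed.

Lemma step_rhs_x_admissible : bounded_lipschitz_rhs rhs_bound rhs_lip step_rhs_x.
Proof.
  pose proof vU_pos. pose proof gU_pos. destruct rhs_lip_bounds as [HL1 [HL2 HL3]].
  assert (Hvcx : lipschitz (fun x => v (cx x)) (Lv * 1)).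
  { apply (lipschitz_comp_on v cx (- (M + 1)) (M + 1)); auto;
      [apply cx_in | apply clamp_lipschitz]. }
  split; [|split].
  - intros t x V. unfold step_rhs_x, rhs_bound.
    pose proof (delay_factor_bounds t V). pose proof (hvb (cx x)). pose proof (cx_in x).
    assert (Rabs (gamma * cx x) <= gamma * (M + 1))
      by (rewrite Rabs_mult, Rabs_right by lra;
          apply Rmult_le_compat_l; [lra | apply Rabs_le; lra]).
    assert (0 <= beta * (v (cx x) * delay_factor t V) <= beta * gU * (vU / v0)).
    { split; [apply Rmult_le_pos; nra|]. unfold Rdiv.
      replace (beta * gU * (vU * / v0)) with (beta * (vU * (gU * / v0))) by ring.
      apply Rmult_le_compat_l; [lra|]. apply Rmult_le_compat; lra. }
    eapply Rle_trans; [apply Rabs_triang|]. rewrite Rabs_Ropp, (Rabs_right (beta * _)) by lra. lra.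
  - intros t. eapply lipschitz2_le; [|exact HL1].
    apply lipschitz2_lin; try lra.
    + apply lipschitz2_mul_sep; [exact Hvcx | apply delay_factor_lipschitz | |].
      * intros x. pose proof (hvb (cx x)). rewrite Rabs_right; lra.
      * intros V. pose proof (delay_factor_bounds t V). rewrite Rabs_right; lra.
    + apply lipschitz2_fst, clamp_lipschitz.
  - intros x V t. unfold step_rhs_x, delay_factor.
    apply (continuous_comp ct (fun u => beta * (v (cx x) *
      (exp (- mu * (u - tau V)) * (g (Y (tau V)) * / v (Y (tau V))))) - gamma * cx x));
      [apply continuous_clamp|].
    apply (ex_derive_continuous (K:=R_AbsRing) (V:=R_NormedModule)). auto_derive. auto.
Qed.

Lemma step_rhs_V_admissible : bounded_lipschitz_rhs rhs_bound rhs_lip step_rhs_V.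
Proof.
  destruct rhs_lip_bounds as [_ [HL2 _]]. split; [|split].
  - intros t x V. unfold step_rhs_V, rhs_bound. pose proof (hvb (cx x)). pose proof dU_pos.
    pose proof M_nonneg. rewrite Rabs_right; nra.
  - intros t. eapply lipschitz2_le; [|exact HL2]. rewrite <- (Rmult_1_r Lv).
    apply lipschitz2_fst, (lipschitz_comp_on v cx (- (M + 1)) (M + 1)); auto;
      [apply cx_in | apply clamp_lipschitz].
  - intros x V t. apply continuous_const.
Qed.

Section StepSolution.

Variables (x V : R -> R).
Hypotheses (hx : lipschitz x rhs_bound) (hV : lipschitz V rhs_bound)
  (hxV : forall t, T <= t <= T + step ->
     x t = Y T + RInt (fun s => step_rhs_x s (x s) (V s)) T t /\
     V t = 0 + RInt (fun s => step_rhs_V s (x s) (V s)) T t).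

Let x_continuous s : continuous x s := lipschitz_continuous x _ hx s.

Let Qx s := step_rhs_x s (x s) (V s).

Lemma Qx_continuous s : continuous Qx s.
Proof.
  destruct step_rhs_x_admissible as [_ [Hl Hc]]. destruct rhs_lip_bounds as [_ [_ HL]].
  apply (continuous_lipschitz2_comp _ rhs_lip); auto;
    [lra | apply lipschitz_continuous with rhs_bound; auto].
Qed.

Lemma x_start : x T = Y T.
Proof.
  pose proof step_pos. destruct (hxV T) as [H1 _]; [lra|].
  rewrite H1, RInt_point_R. ring.
Qed.

Lemma x_in_box t : T <= t <= T + step -> cx (x t) = x t.
Proof.
  intros Ht. apply clamp_id. pose proof (hx t T) as Hslope. rewrite x_start in Hslope.
  pose proof (upto_bound _ _ hY T) as HYT. pose proof step_mul_rhs_bound. pose proof rhs_bound_pos.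
  assert (rhs_bound * Rabs (t - T) <= 1) by (rewrite Rabs_right by lra; nra).
  apply Rabs_le_between in HYT. apply Rabs_le_between' in Hslope. lra.
Qed.

Lemma V_eq t : T <= t <= T + step -> V t = RInt (fun u => v (x u)) T t.
Proof.
  intros Ht. destruct (hxV t Ht) as [_ ->]. rewrite Rplus_0_l. apply RInt_ext.
  intros u Hu. rewrite Rmin_left, Rmax_right in Hu by lra. unfold step_rhs_V.
  rewrite x_in_box by lra. reflexivity.
Qed.

Lemma V_range t : T <= t <= T + step -> 0 <= V t <= a.
Proof.
  intros Ht. rewrite V_eq by auto. pose proof vU_pos. pose proof step_le_delay.
  destruct (RInt_v_bounds x T (T + step) (fun s _ => x_continuous s) T t)
    as [Hlo Hhi]; try lra.
  split; [nra|]. eapply Rle_trans; [exact Hhi|].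
  apply Rle_trans with (vU * (a / vU)); [apply Rmult_le_compat_l; lra | right; field; lra].
Qed.

Lemma x_derive t : T < t < T + step -> is_derive x t (Qx t).
Proof.
  intros Ht. apply (is_derive_integral_eq x Qx (Y T) T T (T + step)); auto.
  - intros u Hu. apply hxV, Hu.
  - apply Qx_continuous.
Qed.

Lemma Qx_eq s : T <= s <= T + step ->
  Qx s + gamma * x s = beta * (v (x s) * (exp (- mu * (s - tau (V s))) *
                         (g (Y (tau (V s))) * / v (Y (tau (V s)))))).
Proof.
  intros Hs. unfold Qx, step_rhs_x, delay_factor. rewrite x_in_box by auto.
  unfold ct. rewrite clamp_id by auto. ring.
Qed.

(* This is where [M >= dU / gamma] keeps the step length uniform. *)
Lemma x_bound t : T <= t <= T + step -> Rabs (x t) <= M.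
Proof.
  intros Ht. set (F := fun s => Qx s + gamma * x s).
  assert (HF : forall s, T < s < t -> 0 <= F s <= beta * gU * (vU / v0)).
  { intros s Hs. unfold F. rewrite Qx_eq by lra.
    pose proof (delay_exp_bounds s (V s)) as HE. unfold ct in HE. rewrite clamp_id in HE by lra.
    pose proof (delay_ratio_bounds (V s)). pose proof (hvb (x s)).
    replace (beta * gU * (vU / v0)) with (beta * (vU * (1 * (gU * / v0)))) by (unfold Rdiv; ring).
    split; [apply Rmult_le_pos; [lra|]; apply Rmult_le_pos; nra|].
    apply Rmult_le_compat_l; [lra|]. apply Rmult_le_compat; [lra | nra | lra |].
    apply Rmult_le_compat; lra. }
  destruct (linear_comparison x F gamma T t 0 (beta * gU * (vU / v0))) as [Hlo Hhi]; auto; try lra.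
  - intros s Hs. unfold F. replace (Qx s + gamma * x s - gamma * x s) with (Qx s) by ring.
    apply x_derive. lra.
  - rewrite x_start in Hlo, Hhi. pose proof (upto_bound _ _ hY T) as HYT.
    apply Rabs_le_between in HYT.
    set (e := exp (- gamma * (t - T))) in *.
    assert (0 < e <= 1).
    { split; [apply exp_pos|]. unfold e.
      replace (- gamma * (t - T)) with (- (gamma * (t - T))) by ring.
      apply exp_neg_le_1. nra. }
    pose proof dU_pos.
    assert (0 <= beta * gU * (vU / v0) / gamma) by (apply Rlt_le, Rdiv_lt_0_compat; lra).
    replace (0 / gamma) with 0 in Hlo by (field; lra).
    apply Rabs_le_between. split; nra.
Qed.

Definition step_extension s := Y (Rmin s T) + x (ct s) - Y T.

Lemma step_extension_old s : s <= T -> step_extension s = Y s.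
Proof.
  intros H. unfold step_extension. rewrite Rmin_left by auto. unfold ct.
  replace (clamp T (T + step) s) with T; [rewrite x_start; ring|].
  pose proof step_pos. unfold clamp, Rmax, Rmin. repeat destruct (Rle_dec _ _); lra.
Qed.

Lemma step_extension_new s : T <= s <= T + step -> step_extension s = x s.
Proof. intros H. unfold step_extension. rewrite Rmin_right by lra. unfold ct.
rewrite clamp_id by lra. ring. Qed.

Lemma step_extension_lipschitz : lipschitz step_extension K.
Proof.
  intros s1 s2. unfold step_extension.
  replace (Y (Rmin s1 T) + x (ct s1) - Y T - (Y (Rmin s2 T) + x (ct s2) - Y T))
    with ((Y (Rmin s1 T) - Y (Rmin s2 T)) + (x (ct s1) - x (ct s2))) by ring.
  eapply Rle_trans; [apply Rabs_triang|].
  pose proof (upto_lipschitz _ _ hY (Rmin s1 T) (Rmin s2 T)). pose proof (hx (ct s1) (ct s2)).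
  assert (Hsplit : Rabs (Rmin s1 T - Rmin s2 T) + Rabs (ct s1 - ct s2) <= Rabs (s1 - s2)).
  { pose proof step_pos. unfold ct, clamp, Rmax, Rmin.
    repeat destruct (Rle_dec _ _); unfold Rabs; repeat destruct (Rcase_abs _); lra. }
  pose proof (Rabs_pos (ct s1 - ct s2)). pose proof (Rabs_pos (Rmin s1 T - Rmin s2 T)).
  pose proof rhs_bound_pos.
  assert (rhs_bound * Rabs (ct s1 - ct s2) <= K * Rabs (ct s1 - ct s2))
    by (apply Rmult_le_compat_r; lra).
  nra.
Qed.

Lemma step_extension_continuous s : continuous step_extension s.
Proof. exact (lipschitz_continuous _ _ step_extension_lipschitz s). Qed.

Lemma step_extension_bound s : Rabs (step_extension s) <= M.
Proof.
  destruct (Rle_dec s T).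
  - rewrite step_extension_old by auto. apply (upto_bound _ _ hY).
  - unfold step_extension. rewrite Rmin_right by lra.
    rewrite Rplus_minus_swap, Rminus_diag, Rplus_0_l.
    apply x_bound. pose proof step_pos. apply clamp_in. lra.
Qed.

Lemma G_step_extension_old c : c <= T -> GG (seg step_extension c) = GG (seg Y c).
Proof.
  intros Hc. symmetry. apply GG_ext.
  - intros s _. apply continuous_shift, Y_continuous.
  - intros u Hu. unfold seg. rewrite step_extension_old by lra. reflexivity.
Qed.

(* On the new step the delayed time is [tau (V t)], because the integral of [v] over
   [tau (V t), t] splits at [T] into [a - V t] and [V t]. *)
Lemma G_step_extension_new t : T <= t <= T + step -> GG (seg step_extension t) = Qx t.
Proof.
  intros Ht. pose proof (upto_nonneg _ _ hY). pose proof r_pos.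
  pose proof (V_range t Ht) as HV. set (tau0 := tau (V t)).
  pose proof (htau_range (V t)) as Ht0. fold tau0 in Ht0.
  assert (Hcont : forall s, - r <= s <= t -> continuous step_extension s)
    by (intros; apply step_extension_continuous).
  assert (I1 : RInt (fun u => v (step_extension u)) tau0 T = a - V t).
  { rewrite <- (htau_int (V t) HV). apply RInt_ext. intros u Hu.
    fold tau0 in Hu. rewrite Rmin_left, Rmax_right in Hu by lra.
    rewrite step_extension_old by lra. reflexivity. }
  assert (I2 : RInt (fun u => v (step_extension u)) T t = V t).
  { rewrite V_eq by auto. apply RInt_ext. intros u Hu.
    rewrite Rmin_left, Rmax_right in Hu by lra. rewrite step_extension_new by lra. reflexivity. }
  assert (I3 : RInt (fun u => v (step_extension u)) tau0 t = a).
  { rewrite <- (RInt_v_comp_Chasles a r v0 vU v ha hv0 hvb hvc hr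
      step_extension (- r) t Hcont tau0 T t) by lra.
    rewrite I1, I2, Rplus_comm. apply Rplus_minus. }
  pose proof (RInt_v_bounds step_extension (- r) t Hcont tau0 t ltac:(lra) ltac:(lra))
    as Hbounds.
  rewrite I3 in Hbounds.
  assert (Hd : delta a r v (seg step_extension t) = t - tau0).
  { apply (delta_eq a r v0 vU v ha hv0 hvb hvc hr).
    - intros s _. apply continuous_shift, step_extension_continuous.
    - pose proof vU_pos. split.
      + destruct (Req_dec (t - tau0) 0) as [E|E]; [rewrite E in Hbounds; lra | lra].
      + apply Rle_lt_trans with (a / v0); auto. apply (Rmult_le_reg_l v0); auto.
        replace (v0 * (a / v0)) with a by (field; lra). lra.
    - unfold seg. rewrite (RInt_shift (fun u => v (step_extension u)));
        [|intros; apply (continuous_comp step_extension v);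
          [apply step_extension_continuous | apply hvc]].
      replace (t + - (t - tau0)) with tau0 by ring. rewrite Rplus_0_r. exact I3. }
  unfold GG, G. rewrite Hd. unfold seg. rewrite Rplus_0_r.
  replace (t + - (t - tau0)) with tau0 by ring.
  rewrite step_extension_new, step_extension_old by lra.
  pose proof (Qx_eq t Ht) as HQ. fold tau0 in HQ. unfold Rdiv. lra.
Qed.

Lemma rhs_upto_at_end : rhs_upto T Y T = Qx T.
Proof.
  pose proof step_pos. pose proof (upto_nonneg _ _ hY).
  unfold rhs_upto. rewrite clamp_id, <- G_step_extension_old by lra. apply G_step_extension_new.
  lra.
Qed.

Lemma rhs_upto_step_extension s :
  rhs_upto (T + step) step_extension s = rhs_upto T Y (Rmin s T) + Qx (ct s) - rhs_upto T Y T.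
Proof.
  pose proof step_pos. pose proof (upto_nonneg _ _ hY).
  rewrite rhs_upto_at_end. unfold rhs_upto at 1. destruct (Rle_dec s T).
  - rewrite Rmin_left by auto.
    replace (ct s) with T by (unfold ct, clamp, Rmax, Rmin; repeat destruct (Rle_dec _ _); lra).
    replace (clamp 0 (T + step) s) with (clamp 0 T s)
      by (unfold clamp, Rmax, Rmin; repeat destruct (Rle_dec _ _); lra).
    rewrite G_step_extension_old by (pose proof (clamp_in 0 T s); lra). unfold rhs_upto. ring.
  - rewrite Rmin_right by lra.
    replace (clamp 0 (T + step) s) with (ct s)
      by (unfold ct, clamp, Rmax, Rmin; repeat destruct (Rle_dec _ _); lra).
    rewrite G_step_extension_new, rhs_upto_at_end by (apply clamp_in; lra). ring.
Qed.

Lemma rhs_upto_step_extension_continuous s : continuous (rhs_upto (T + step) step_extension) s.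
Proof.
  eapply continuous_ext; [intros; symmetry; apply rhs_upto_step_extension|].
  apply (continuous_minus (V:=R_NormedModule)); [|apply continuous_const].
  apply (continuous_plus (V:=R_NormedModule)).
  - apply (continuous_comp (fun s => Rmin s T) (rhs_upto T Y));
      [|apply (upto_rhs_continuous _ _ hY)].
    apply (lipschitz_continuous _ 1). intros s1 s2. rewrite Rmult_1_l.
    unfold Rmin. repeat destruct (Rle_dec _ _); unfold Rabs; repeat destruct (Rcase_abs _); lra.
  - apply (continuous_comp ct Qx); [apply continuous_clamp | apply Qx_continuous].
Qed.

Lemma solution_upto_step_extension : solution_upto (T + step) step_extension.
Proof.
  pose proof step_pos. pose proof (upto_nonneg _ _ hY).
  assert (Hold : forall t, 0 <= t <= T ->
    RInt (rhs_upto (T + step) step_extension) 0 t = RInt (rhs_upto T Y) 0 t).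
  { intros t Ht. apply RInt_ext. rewrite Rmin_left, Rmax_right by lra. intros u Hu.
    rewrite rhs_upto_step_extension, Rmin_left, rhs_upto_at_end by lra.
    replace (ct u) with T by (unfold ct, clamp, Rmax, Rmin; repeat destruct (Rle_dec _ _); lra).
    apply Rplus_minus_r. }
  constructor; [lra | | apply step_extension_bound | apply step_extension_lipschitz | |
                apply rhs_upto_step_extension_continuous].
  - intros s Hs. rewrite step_extension_old by lra. apply (upto_init _ _ hY), Hs.
  - intros t Ht. destruct (Rle_dec t T).
    + rewrite step_extension_old, Hold by lra. apply (upto_integral _ _ hY). lra.
    + rewrite step_extension_new by lra. destruct (hxV t) as [-> _]; [lra|].
      rewrite (upto_integral _ _ hY T), <- Hold by lra.
      rewrite <- (RInt_Chasles_R _ 0 T t) by apply rhs_upto_step_extension_continuous.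
      replace (RInt (fun s => step_rhs_x s (x s) (V s)) T t) with
        (RInt (rhs_upto (T + step) step_extension) T t); [ring|].
      apply RInt_ext. rewrite Rmin_left, Rmax_right by lra. intros u Hu.
      rewrite rhs_upto_step_extension, Rmin_right, rhs_upto_at_end by lra.
      unfold ct. rewrite clamp_id by lra. rewrite (Rplus_comm (Qx T)), Rplus_minus_r. reflexivity.
Qed.

End StepSolution.

Lemma solution_upto_step_exists :
  exists Y', solution_upto (T + step) Y' /\ forall s, s <= T -> Y' s = Y s.
Proof.
  destruct rhs_lip_bounds as [_ [_ HL]].
  destruct (picard_lindelof2 T step rhs_lip rhs_bound (Y T) 0 step_rhs_x step_rhs_V)
    as [x [V [Hx [HV HxV]]]];
    [apply step_pos | lra | apply step_mul_rhs_lip | apply step_rhs_x_admissible |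
     apply step_rhs_V_admissible |].
  exists (step_extension x). split.
  - apply (solution_upto_step_extension x V Hx HV HxV).
  - intros s Hs. apply (step_extension_old x V HxV s Hs).
Qed.

End Step.

Lemma solution_upto_extend T Y : solution_upto T Y ->
  exists Y', solution_upto (T + step) Y' /\ forall s, s <= T -> Y' s = Y s.
Proof.
  intros HY.
  destruct (delay_inverse_exists a r v0 vU v ha hv0 hvb hvc hr Y T (upto_nonneg _ _ HY))
    as [tau [H1 [H2 H3]]].
  - intros s _. apply (lipschitz_continuous _ _ (upto_lipschitz _ _ HY)).
  - exact (solution_upto_step_exists T Y tau HY H1 H2 H3).
Qed.

Definition next_solution (T : R) (Y : R -> R) : R -> R :=
  epsilon (inhabits Y) (fun Y' => solution_upto (T + step) Y' /\ forall s, s <= T -> Y' s = Y s).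

Fixpoint solution_iter (n : nat) : R -> R :=
  match n with
  | O => fun s => phi (clamp (- r) 0 s)
  | S n => next_solution (INR n * step) (solution_iter n)
  end.

Lemma solution_iter_upto n : solution_upto (INR n * step) (solution_iter n).
Proof.
  induction n as [|n IH]; simpl solution_iter.
  - rewrite Rmult_0_l. apply solution_upto_0.
  - rewrite S_INR, Rmult_plus_distr_r, Rmult_1_l.
    exact (proj1 (epsilon_spec _ _ (solution_upto_extend _ _ IH))).
Qed.

Lemma solution_iter_succ n s : s <= INR n * step -> solution_iter (S n) s = solution_iter n s.
Proof.
  exact (proj2 (epsilon_spec _ _ (solution_upto_extend _ _ (solution_iter_upto n))) s).
Qed.

Lemma solution_iter_agree n m s : (n <= m)%nat -> s <= INR n * step ->
  solution_iter m s = solution_iter n s.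
Proof.
  intros Hnm Hs. induction Hnm as [|m Hnm IH]; [reflexivity|].
  rewrite solution_iter_succ; [exact IH|].
  eapply Rle_trans; [exact Hs|].
  apply Rmult_le_compat_r; [apply Rlt_le, step_pos | apply le_INR, Hnm].
Qed.

Definition steps_beyond (t : R) : nat := Z.to_nat (up (t / step)).

Lemma lt_steps_beyond t : t < INR (steps_beyond t) * step.
Proof.
  unfold steps_beyond. pose proof step_pos. destruct (archimed (t / step)) as [H1 _].
  assert (IZR (up (t / step)) <= INR (Z.to_nat (up (t / step)))).
  { destruct (Z_le_gt_dec 0 (up (t / step))).
    - rewrite INR_IZR_INZ, Z2Nat.id by auto. lra.
    - pose proof (pos_INR (Z.to_nat (up (t / step)))).
      assert (IZR (up (t / step)) < 0) by (apply IZR_lt; lia). lra. }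
  apply (Rmult_lt_reg_r (/ step)); [apply Rinv_0_lt_compat; auto|].
  rewrite Rmult_assoc, Rinv_r, Rmult_1_r by lra. unfold Rdiv in H1. lra.
Qed.

Definition global_x (t : R) : R := solution_iter (steps_beyond t) t.

Lemma global_x_eq n t : t <= INR n * step -> global_x t = solution_iter n t.
Proof.
  intros Ht. unfold global_x. pose proof (lt_steps_beyond t).
  destruct (le_le_S_dec (steps_beyond t) n) as [Hle|Hlt].
  - symmetry. apply solution_iter_agree; auto. lra.
  - apply solution_iter_agree; [lia | exact Ht].
Qed.

Section Assembly.

Variable dphi : R -> R.
Hypothesis hXG : in_XG beta mu gamma a r g v phi dphi.

Let rhs_iter n := rhs_upto (INR n * step) (solution_iter n).

Lemma solution_iter_continuous n s : continuous (solution_iter n) s.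
Proof. exact (lipschitz_continuous _ _ (upto_lipschitz _ _ (solution_iter_upto n)) s). Qed.

Lemma global_x_init s : - r <= s <= 0 -> global_x s = phi s.
Proof.
  intros Hs. rewrite (global_x_eq 0) by (simpl; lra).
  apply (upto_init _ _ (solution_iter_upto 0)), Hs.
Qed.

Lemma G_solution_iter n s : s <= INR n * step -> GG (seg (solution_iter n) s) = GG (seg global_x s).
Proof.
  intros Hs. apply GG_ext.
  - intros u _. apply continuous_shift, solution_iter_continuous.
  - intros u Hu. unfold seg. rewrite (global_x_eq n); [reflexivity | lra].
Qed.

Lemma rhs_iter_eq n s : 0 <= s <= INR n * step -> rhs_iter n s = GG (seg global_x s).
Proof. intros Hs. unfold rhs_iter, rhs_upto. rewrite clamp_id by auto. apply G_solution_iter. lra.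
Qed.

Lemma G_global_x_0 : GG (seg global_x 0) = dphi 0.
Proof.
  pose proof r_pos.
  rewrite <- (G_solution_iter 0) by (simpl; lra). destruct hXG as [_ ->].
  apply GG_ext.
  - intros u _. apply continuous_shift, solution_iter_continuous.
  - intros u Hu. unfold seg. rewrite Rplus_0_l. apply (upto_init _ _ (solution_iter_upto 0)), Hu.
Qed.

(* Before time 0 the derivative is that of the initial function; at 0 both definitions
   agree because [phi] lies in X_G. *)
Definition global_dx (t : R) : R := if Rlt_dec t 0 then dphi t else GG (seg global_x t).

Lemma global_dx_nonneg t : 0 <= t -> global_dx t = GG (seg global_x t).
Proof. intros. unfold global_dx. destruct (Rlt_dec t 0); [lra | reflexivity]. Qed.

Lemma global_dx_nonpos t : t <= 0 -> global_dx t = dphi t.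
Proof.
  intros. unfold global_dx. destruct (Rlt_dec t 0); [reflexivity|].
  replace t with 0 by lra. apply G_global_x_0.
Qed.

Lemma global_x_derive_pos s : 0 < s -> is_derive global_x s (global_dx s).
Proof.
  intros Hs. pose proof (lt_steps_beyond s). set (m := steps_beyond s) in *.
  rewrite global_dx_nonneg, <- (rhs_iter_eq m) by lra.
  apply (is_derive_integral_eq global_x (rhs_iter m) (phi 0) 0 0 (INR m * step)); [lra| |].
  - intros u Hu. rewrite (global_x_eq m) by lra.
    apply (upto_integral _ _ (solution_iter_upto m)), Hu.
  - apply (upto_rhs_continuous _ _ (solution_iter_upto m)).
Qed.

Lemma phi_deriv_within_at s : - r <= s <= 0 -> deriv_within_at (Iseg r) phi (dphi s) s.
Proof. intros Hs. apply has_deriv_within_iff; [apply hXG | exact Hs]. Qed.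

Lemma dphi_cont_within_at s : - r <= s <= 0 -> cont_within_at (Iseg r) dphi s.
Proof. intros Hs. apply cont_within_iff; [apply hXG | exact Hs]. Qed.

Lemma global_x_deriv_initial (D : R -> Prop) s rho : - r <= s <= 0 -> 0 < rho ->
  (forall h, Rabs h < rho -> D (s + h) -> - r <= s + h <= 0) ->
  deriv_within_at D global_x (global_dx s) s.
Proof.
  intros Hs Hrho HD. rewrite global_dx_nonpos by lra.
  apply (deriv_within_at_transfer _ (Iseg r) global_x phi (dphi s) s rho);
    [exact Hrho | apply phi_deriv_within_at, Hs | |].
  - intros h _ Hh HDh. pose proof (HD h Hh HDh). split; [exact H | apply global_x_init, H].
  - apply global_x_init, Hs.
Qed.

Lemma global_x_right_deriv_0 :
  deriv_within_at (fun t => 0 <= t /\ - r <= t) global_x (global_dx 0) 0.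
Proof.
  pose proof step_pos. pose proof r_pos.
  set (Psi := fun u => phi 0 + RInt (rhs_iter 1) 0 u).
  assert (Hd : is_derive Psi 0 (rhs_iter 1 0)).
  { apply (is_derive_integral_eq Psi (rhs_iter 1) (phi 0) 0 (-1) 1); [lra | reflexivity |].
    apply (upto_rhs_continuous _ _ (solution_iter_upto 1)). }
  rewrite (rhs_iter_eq 1) in Hd by (simpl; lra). rewrite <- global_dx_nonneg in Hd by lra.
  apply (deriv_within_at_transfer _ (fun _ => True) global_x Psi _ 0 step);
    [lra | apply is_derive_deriv_within_at, Hd | |].
  - intros h _ Hh [H1 _]. rewrite Rplus_0_l in *. apply Rabs_lt_between in Hh.
    split; [exact I|]. rewrite (global_x_eq 1) by (simpl; lra).
    apply (upto_integral _ _ (solution_iter_upto 1)). simpl; lra.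
  - unfold Psi. rewrite global_x_init, RInt_point_R by lra. ring.
Qed.

Lemma global_x_deriv_within_at s : - r <= s ->
  deriv_within_at (fun t => - r <= t) global_x (global_dx s) s.
Proof.
  intros Hs. destruct (Rtotal_order s 0) as [Hn|[->|Hp]].
  - apply (global_x_deriv_initial _ s (- s)); [lra | lra |].
    intros h Hh HD. apply Rabs_lt_between in Hh. lra.
  - apply deriv_within_at_split; [|apply global_x_right_deriv_0].
    apply (global_x_deriv_initial _ 0 1); [lra | lra | intros h _ [H1 H2]; lra].
  - apply is_derive_deriv_within_at, global_x_derive_pos, Hp.
Qed.

Lemma global_dx_cont_initial (D : R -> Prop) s rho : - r <= s <= 0 -> 0 < rho ->
  (forall y, Rabs (y - s) < rho -> D y -> - r <= y <= 0) -> cont_within_at D global_dx s.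
Proof.
  intros Hs Hrho HD.
  apply (cont_within_at_transfer _ (Iseg r) global_dx dphi s rho);
    [exact Hrho | apply dphi_cont_within_at, Hs | |].
  - intros y Hy HDy. pose proof (HD y Hy HDy). split; [exact H | apply global_dx_nonpos; lra].
  - apply global_dx_nonpos. lra.
Qed.

Lemma global_dx_cont_iter (D : R -> Prop) s m rho : 0 <= s -> 0 < rho ->
  (forall y, Rabs (y - s) < rho -> D y -> 0 <= y <= INR m * step) ->
  s <= INR m * step -> cont_within_at D global_dx s.
Proof.
  intros Hs Hrho HD Hsm.
  apply (cont_within_at_transfer _ (fun _ => True) global_dx (rhs_iter m) s rho); [exact Hrho| | |].
  - apply continuous_cont_within_at, (upto_rhs_continuous _ _ (solution_iter_upto m)).
  - intros y Hy HDy. pose proof (HD y Hy HDy).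
    split; [exact I | rewrite global_dx_nonneg, rhs_iter_eq; auto; lra].
  - rewrite global_dx_nonneg, rhs_iter_eq; auto; lra.
Qed.

Lemma global_dx_cont_within_at s : - r <= s -> cont_within_at (fun t => - r <= t) global_dx s.
Proof.
  intros Hs. pose proof step_pos. destruct (Rtotal_order s 0) as [Hn|[->|Hp]].
  - apply (global_dx_cont_initial _ s (- s)); [lra | lra |].
    intros y Hy HD. apply Rabs_lt_between in Hy. lra.
  - apply cont_within_at_split.
    + apply (global_dx_cont_initial _ 0 1); [lra | lra | intros y _ [H1 H2]; lra].
    + apply (global_dx_cont_iter _ 0 1 step); [lra | lra | | simpl; lra].
      intros y Hy [H1 _]. apply Rabs_lt_between in Hy. simpl; lra.
  - pose proof (lt_steps_beyond s).
    apply (global_dx_cont_iter _ s (steps_beyond s) (Rmin s (INR (steps_beyond s) * step - s)));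
      [lra | apply Rmin_pos; lra | | lra].
    intros y Hy _. pose proof (Rmin_l s (INR (steps_beyond s) * step - s)).
    pose proof (Rmin_r s (INR (steps_beyond s) * step - s)). apply Rabs_lt_between in Hy. lra.
Qed.

Lemma global_solution_constructed : global_solution beta mu gamma a r g v phi global_x global_dx.
Proof.
  split; [split|split].
  - apply has_deriv_within_iff. intros s Hs. apply global_x_deriv_within_at, Hs.
  - apply cont_within_iff. intros s Hs. apply global_dx_cont_within_at, Hs.
  - apply global_x_init.
  - intros t Ht. apply global_dx_nonneg. lra.
Qed.

End Assembly.

End Existence.

Lemma global_solution_exists (beta mu gamma a r gU v0 vU : R) (g v phi dphi : R -> R) :
  0 < beta -> 0 < mu -> 0 < gamma -> 0 < a -> 0 < v0 -> (forall x, v0 <= v x <= vU) ->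
  a / v0 < r -> (forall x, 0 < g x <= gU) -> C1_R g -> C1_R v ->
  in_XG beta mu gamma a r g v phi dphi ->
  exists x dx, global_solution beta mu gamma a r g v phi x dx.
Proof.
  intros hbeta hmu hgamma ha hv0 hvb hr hgb hg hv hXG.
  pose proof (C1_R_continuous v hv) as hvc.
  pose proof (delay_horizon_pos a r v0 vU v ha hv0 hvb hvc hr) as Hr.
  destruct (C1_on_interval_clamp_lipschitz phi dphi (- r) 0 ltac:(lra) (proj1 hXG)) as [Kp HKp].
  set (M := Rmax (Rabs (phi (- r)) + Kp * (0 - - r)) (beta * gU * (vU / v0) / gamma)).
  assert (HM : 0 <= M + 1).
  { pose proof (Rmax_l (Rabs (phi (- r)) + Kp * (0 - - r)) (beta * gU * (vU / v0) / gamma)) as HM.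
    pose proof (Rabs_pos (phi (- r))). pose proof (lipschitz_nonneg _ _ HKp). fold M in HM. nra. }
  destruct (C1_R_lipschitz_on g (M + 1) hg HM) as [Lg [HLg0 HLg]].
  destruct (C1_R_lipschitz_on v (M + 1) hv HM) as [Lv [HLv0 HLv]].
  set (K := Rmax Kp (rhs_bound beta gamma gU v0 vU M)).
  exists (global_x beta mu gamma a r gU v0 vU M K Lv Lg g v phi),
    (global_dx beta mu gamma a r gU v0 vU M K Lv Lg g v phi dphi).
  apply global_solution_constructed; auto.
  - apply Rmax_r.
  - apply Rmax_r.
  - intros s. eapply Rle_trans; [apply lipschitz_clamp_bound; [lra | exact HKp] | apply Rmax_l].
  - apply (lipschitz_le _ Kp); [exact HKp | apply Rmax_l].
Qed.

(** * Bounds on solutions *)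

Section SolutionBounds.

Variables (beta mu gamma a r g0 gU v0 vU : R) (g v phi x dx : R -> R).
Hypotheses (hbeta : 0 < beta) (hmu : 0 < mu) (hgamma : 0 < gamma) (ha : 0 < a)
  (hv0 : 0 < v0) (hvb : forall x, v0 <= v x <= vU) (hr : a / v0 < r)
  (hg0 : 0 < g0) (hgb : forall x, g0 <= g x <= gU) (hvc : forall x, continuous v x)
  (hsol : global_solution beta mu gamma a r g v phi x dx).

Lemma solution_derive t : 0 < t -> is_derive x t (dx t).
Proof.
  intros Ht. destruct hsol as [[Hd _] _]. rewrite has_deriv_within_iff in Hd.
  pose proof (delay_horizon_pos a r v0 vU v ha hv0 hvb hvc hr).
  apply (deriv_within_at_is_derive (fun u => - r <= u) x (dx t) t (t + r)); [lra| |apply Hd; lra].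
  intros y Hy. apply Rabs_lt_between in Hy. lra.
Qed.

Lemma solution_continuous t : - r < t -> continuous x t.
Proof.
  intros Ht. destruct hsol as [[Hd _] _]. rewrite has_deriv_within_iff in Hd.
  apply (cont_within_at_continuous (fun u => - r <= u) x t (t + r)); [lra| |].
  - intros y Hy. apply Rabs_lt_between in Hy. lra.
  - eapply deriv_within_at_cont_within_at, Hd. lra.
Qed.

(* Since delta <= a / v0, the production term of G stays in [dL, dU]. *)
Lemma G_plus_decay_bounds t : 0 < t ->
  beta * (v0 / vU) * exp (- mu * a / v0) * g0 <= G beta mu gamma a r g v (seg x t) + gamma * x t
  <= beta * gU * (vU / v0).
Proof.
  intros Ht. pose proof (delay_horizon_pos a r v0 vU v ha hv0 hvb hvc hr).
  destruct (delta_spec a r v0 vU v ha hv0 hvb hvc hr (seg x t)) as [_ [[Hd0 Hd] _]].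
  { intros s Hs. apply continuous_shift, solution_continuous. lra. }
  set (d := delta a r v (seg x t)) in *.
  assert (0 <= d) by (eapply Rle_trans; [|exact Hd0]; pose proof (hvb 0);
    apply Rlt_le, Rdiv_lt_0_compat; lra).
  unfold G. fold d. unfold seg. rewrite Rplus_0_r.
  set (p := v (x t)). set (q := v (x (t + - d))). set (n := g (x (t + - d))).
  replace (beta * exp (- mu * d) * (p / q) * n - gamma * x t + gamma * x t)
    with (beta * exp (- mu * d) * (p / q) * n) by ring.
  assert (Hp : v0 <= p <= vU) by apply hvb. assert (Hq : v0 <= q <= vU) by apply hvb.
  assert (Hn : g0 <= n <= gU) by apply hgb.
  assert (HE : exp (- mu * a / v0) <= exp (- mu * d) <= 1).
  { split.
    - replace (- mu * a / v0) with (- mu * (a / v0)) by (field; lra).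
      destruct (Req_dec d (a / v0)) as [->|E]; [lra|]. left; apply exp_increasing. nra.
    - replace (- mu * d) with (- (mu * d)) by ring. apply exp_neg_le_1. nra. }
  pose proof (exp_pos (- mu * a / v0)).
  assert (Hpq : v0 / vU <= p / q <= vU / v0).
  { unfold Rdiv. split; apply Rmult_le_compat; try lra;
      try (left; apply Rinv_0_lt_compat; lra); apply Rinv_le_contravar; lra. }
  assert (0 < v0 / vU) by (apply Rdiv_lt_0_compat; lra).
  split.
  - apply Rmult_le_compat; try lra; [apply Rmult_le_pos; [apply Rmult_le_pos|]; lra|].
    replace (beta * exp (- mu * d) * (p / q)) with (beta * (p / q) * exp (- mu * d)) by ring.
    apply Rmult_le_compat; try lra; [apply Rmult_le_pos; lra | apply Rmult_le_compat_l; lra].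
  - replace (beta * gU * (vU / v0)) with (beta * 1 * (vU / v0) * gU) by ring.
    apply Rmult_le_compat; try lra; [apply Rmult_le_pos; nra|].
    apply Rmult_le_compat; try lra; [nra | apply Rmult_le_compat_l; lra].
Qed.

Lemma solution_envelope t : 0 < t ->
  beta * (v0 / vU) * exp (- mu * a / v0) * g0 / gamma +
    (x 0 - beta * (v0 / vU) * exp (- mu * a / v0) * g0 / gamma) * exp (- gamma * t) <= x t <=
  beta * gU * (vU / v0) / gamma + (x 0 - beta * gU * (vU / v0) / gamma) * exp (- gamma * t).
Proof.
  intros Ht. pose proof (delay_horizon_pos a r v0 vU v ha hv0 hvb hvc hr).
  replace (- gamma * t) with (- gamma * (t - 0)) by ring.
  apply (linear_comparison x (fun s => G beta mu gamma a r g v (seg x s) + gamma * x s));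
    auto; try lra.
  - intros s Hs.
    replace (G beta mu gamma a r g v (seg x s) + gamma * x s - gamma * x s) with (dx s).
    + apply solution_derive. lra.
    + destruct hsol as [_ [_ ->]]; [ring | lra].
  - intros s Hs. apply solution_continuous. lra.
  - intros s Hs. apply G_plus_decay_bounds. lra.
Qed.

End SolutionBounds.

Section Envelope.

Variables (x : R -> R) (lo hi c : R).
Hypotheses (hc : 0 < c) (hlohi : lo <= hi)
  (henv : forall t, 0 < t ->
     lo + (x 0 - lo) * exp (- c * t) <= x t <= hi + (x 0 - hi) * exp (- c * t)).

Lemma exp_decay_bounds t : 0 < t -> 0 < exp (- c * t) < 1.
Proof. intros Ht. split; [apply exp_pos|]. rewrite <- exp_0. apply exp_increasing. nra. Qed.

Lemma envelope_invariant : lo <= x 0 <= hi -> forall t, 0 <= t -> lo <= x t <= hi.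
Proof.
  intros H0 t Ht. destruct (Rle_lt_or_eq_dec 0 t Ht) as [Hp|<-]; [|exact H0].
  pose proof (henv t Hp). pose proof (exp_decay_bounds t Hp). nra.
Qed.

Lemma envelope_positive : 0 < lo -> 0 < x 0 -> forall t, 0 <= t -> 0 < x t.
Proof.
  intros Hlo H0 t Ht. destruct (Rle_lt_or_eq_dec 0 t Ht) as [Hp|<-]; [|exact H0].
  pose proof (henv t Hp). pose proof (exp_decay_bounds t Hp). nra.
Qed.

(* [e^(-ct) <= 1 / (1 + ct)] gives an explicit entrance time into any neighbourhood. *)
Lemma envelope_attracts (N : R -> Prop) : nbhd_of_set (fun y => lo <= y <= hi) N ->
  exists t0, 0 <= t0 /\ forall t, t0 <= t -> N (x t).
Proof.
  intros [O [HO [HQO HON]]].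
  destruct (HO lo (HQO lo ltac:(lra))) as [[e1 He1] H1].
  destruct (HO hi (HQO hi ltac:(lra))) as [[e2 He2] H2]. simpl in H1, H2.
  set (e := Rmin e1 e2). assert (He : 0 < e) by (apply Rmin_pos; auto).
  pose proof (Rmin_l e1 e2) as He1'. pose proof (Rmin_r e1 e2) as He2'. fold e in He1', He2'.
  set (C := Rabs (x 0 - lo) + Rabs (x 0 - hi)).
  pose proof (Rabs_pos (x 0 - lo)). pose proof (Rabs_pos (x 0 - hi)).
  assert (HC0 : 0 <= C / (c * e))
    by (apply Rmult_le_pos; [unfold C; lra | left; apply Rinv_0_lt_compat; nra]).
  exists (C / (c * e) + 1). split; [lra|]. intros t Ht.
  destruct (henv t ltac:(lra)) as [HL HU]. pose proof (exp_decay_bounds t ltac:(lra)).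
  set (E := exp (- c * t)) in *.
  assert (HCE : C * E < e).
  { assert (HE : E <= / (1 + c * t)).
    { unfold E. replace (- c * t) with (- (c * t)) by ring. rewrite exp_Ropp.
      apply Rinv_le_contravar; [nra | apply exp_ineq1_le]. }
    assert (C < e * (1 + c * t)).
    { assert (Ht' : C / (c * e) < t) by lra.
      apply (Rmult_lt_compat_l (c * e)) in Ht'; [|nra].
      replace (c * e * (C / (c * e))) with C in Ht' by (field; lra). nra. }
    apply Rle_lt_trans with (C * / (1 + c * t)); [apply Rmult_le_compat_l; unfold C; lra|].
    apply (Rmult_lt_reg_r (1 + c * t)); [nra|].
    replace (C * / (1 + c * t) * (1 + c * t)) with C by (field; nra). lra. }
  assert (- Rabs (x 0 - lo) <= x 0 - lo) by (pose proof (Rabs_maj2 (x 0 - lo)); lra).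
  pose proof (RRle_abs (x 0 - hi)).
  apply HON. destruct (Rlt_dec (x t) lo) as [Hlt|Hge].
  - apply H1, ball_R_Rabs. rewrite Rabs_left by lra. unfold C in HCE. nra.
  - destruct (Rlt_dec hi (x t)) as [Hgt|Hle].
    + apply H2, ball_R_Rabs. rewrite Rabs_right by lra. unfold C in HCE. nra.
    + apply HQO. lra.
Qed.

End Envelope.

Lemma production_bounds_ordered beta mu gamma a g0 gU v0 vU :
  0 < beta -> 0 < mu -> 0 < gamma -> 0 < a -> 0 < v0 -> v0 <= vU -> 0 < g0 <= gU ->
  0 < beta * (v0 / vU) * exp (- mu * a / v0) * g0 / gamma <= beta * gU * (vU / v0) / gamma.
Proof.
  intros hbeta hmu hgamma ha hv0 hvU hg.
  assert (HE : 0 < exp (- mu * a / v0) <= 1).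
  { split; [apply exp_pos|]. replace (- mu * a / v0) with (- (mu * a / v0)) by (field; lra).
    apply exp_neg_le_1, Rlt_le, Rdiv_lt_0_compat; nra. }
  assert (Hv : 0 < v0 / vU <= vU / v0).
  { split; [apply Rdiv_lt_0_compat; lra|]. apply Rle_trans with 1.
    - apply (Rmult_le_reg_r vU); [lra|]. unfold Rdiv. rewrite Rmult_assoc, Rinv_l; lra.
    - apply (Rmult_le_reg_r v0); [lra|]. unfold Rdiv. rewrite Rmult_assoc, Rinv_l; lra. }
  assert (HdL : 0 < beta * (v0 / vU) * exp (- mu * a / v0) * g0)
    by (apply Rmult_lt_0_compat; [apply Rmult_lt_0_compat; [apply Rmult_lt_0_compat|]|]; lra).
  assert (HLU : beta * (v0 / vU) * exp (- mu * a / v0) * g0 <= beta * gU * (vU / v0)).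
  { replace (beta * gU * (vU / v0)) with (beta * (vU / v0) * 1 * gU) by ring.
    apply Rmult_le_compat; try lra; [apply Rmult_le_pos; [apply Rmult_le_pos|]; lra|].
    apply Rmult_le_compat; try lra; [apply Rmult_le_pos; lra | apply Rmult_le_compat_l; lra]. }
  split; [apply Rdiv_lt_0_compat; lra|].
  apply Rmult_le_compat_r; [left; apply Rinv_0_lt_compat; lra | exact HLU].
Qed.

Theorem proposition3p2
  (beta mu gamma a r g0 gU v0 vU : R) (g v : R -> R)
  (hbeta : 0 < beta) (hmu : 0 < mu) (hgamma : 0 < gamma) (ha : 0 < a)
  (hg : C1_R g) (hg0pos : 0 < g0)
  (hg0 : is_inf (fun y => exists x, y = g x) g0)
  (hgU : is_lub (fun y => exists x, y = g x) gU)
  (hv : C1_R v) (hv0 : 0 < v0) (hvb : forall x, v0 <= v x <= vU)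
  (hr : a / v0 < r) :
  let dL := beta * (v0 / vU) * exp (- mu * a / v0) * g0 in
  let dU := beta * gU * (vU / v0) in
  let Q := fun y => dL / gamma <= y <= dU / gamma in
  forall phi dphi : R -> R,
    in_XG beta mu gamma a r g v phi dphi ->
    (* (i) t_phi = oo : the solution exists on [-r, oo) *)
    (exists x dx : R -> R, global_solution beta mu gamma a r g v phi x dx) /\
    (forall x dx : R -> R, global_solution beta mu gamma a r g v phi x dx ->
      (* (ii) *)
      (forall N : R -> Prop, nbhd_of_set Q N ->
         exists t0, 0 <= t0 /\ forall t, t0 <= t -> N (x t)) /\
      (* (iii) *)
      ((forall s, Iseg r s -> Q (phi s)) -> forall t, 0 <= t -> Q (x t)) /\
      (* (iv) *)
      ((forall s, Iseg r s -> 0 < phi s) -> forall t, - r <= t -> 0 < x t)).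
Proof.
  intros dL dU Q phi dphi HXG.
  assert (hgb : forall x, g0 <= g x <= gU) by (intros x; split; [apply hg0 | apply hgU]; eauto).
  pose proof (C1_R_continuous v hv) as hvc. pose proof (hgb 0). pose proof (hvb 0).
  pose proof (delay_horizon_pos a r v0 vU v ha hv0 hvb hvc hr).
  destruct (production_bounds_ordered beta mu gamma a g0 gU v0 vU) as [HdL HLU]; auto; try lra.
  split.
  - apply (global_solution_exists beta mu gamma a r gU v0 vU g v phi dphi); auto.
    intros x. pose proof (hgb x). lra.
  - intros x dx Hsol.
    pose proof (solution_envelope beta mu gamma a r g0 gU v0 vU g v phi x dx) as Henv.
    assert (Hx0 : x 0 = phi 0) by (apply Hsol; unfold Iseg; lra).
    split; [|split].
    + apply (envelope_attracts x _ _ gamma); auto.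
    + intros HQ. apply (envelope_invariant x _ _ gamma); auto.
      rewrite Hx0. apply HQ. unfold Iseg. lra.
    + intros Hpos t Ht. destruct (Rle_lt_dec t 0).
      * rewrite (proj1 (proj2 Hsol)) by (unfold Iseg; lra). apply Hpos. unfold Iseg. lra.
      * apply (envelope_positive x (dL / gamma) (dU / gamma) gamma); auto; [|lra].
        rewrite Hx0. apply Hpos. unfold Iseg. lra.
Qed.
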